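(* The unit interval $I=[0,1]$ and, for every integer $n \ge 1$, the sphere $S^n$ are reconstructible.
   Context: For a topological space $X$ and $x \in X$, the set $X\setminus\{x\}$ carries the subspace topology. A card of $X$ is a space homeomorphic to $X \setminus \{x\}$ for some $x \in X$. The deck of $X$ is $\mathcal{D}(X)=\{[X\setminus\{x\}]_\sim : x \in X\}$, where $[Y]_\sim$ denotes the homeomorphism class of $Y$. A space $Z$ is a reconstruction of $X$ if $\mathcal{D}(Z)=\mathcal{D}(X)$. A space $X$ is reconstructible if every reconstruction of $X$ is homeomorphic to $X$. *)

From Stdlib Require Import Reals Lra.
Open Scope R_scope.
Set Implicit Arguments.

Record TopSpace := {
  carrier :> Type;
  is_open : (carrier -> Prop) -> Prop;
  open_full : is_open (fun _ => True);
  open_inter : forall U V, is_open U -> is_open V -> is_open (fun x => U x /\ V x);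
  open_union : forall F : (carrier -> Prop) -> Prop,
      (forall U, F U -> is_open U) -> is_open (fun x => exists U, F U /\ U x)
}.

Definition continuous {X Y : TopSpace} (f : X -> Y) : Prop :=
  forall U, is_open Y U -> is_open X (fun x => U (f x)).

Definition homeomorphic (X Y : TopSpace) : Prop :=
  exists (f : X -> Y) (g : Y -> X),
    continuous f /\ continuous g /\
    (forall x, g (f x) = x) /\ (forall y, f (g y) = y).

Definition sub_open {X : TopSpace} (P : X -> Prop) (V : {x : X | P x} -> Prop) : Prop :=
  exists U, is_open X U /\ forall y, V y <-> U (proj1_sig y).

Lemma sub_open_full (X : TopSpace) (P : X -> Prop) : sub_open P (fun _ => True).
Proof. exists (fun _ => True); split; [apply open_full | tauto]. Qed.

Lemma sub_open_inter (X : TopSpace) (P : X -> Prop) U V :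
  sub_open P U -> sub_open P V -> sub_open P (fun x => U x /\ V x).
Proof.
  intros [U' [HU HU']] [V' [HV HV']].
  exists (fun x => U' x /\ V' x); split; [apply open_inter; auto|].
  intro y; rewrite HU', HV'; tauto.
Qed.

Lemma sub_open_union (X : TopSpace) (P : X -> Prop) (F : ({x : X | P x} -> Prop) -> Prop) :
  (forall U, F U -> sub_open P U) -> sub_open P (fun x => exists U, F U /\ U x).
Proof.
  intros HF.
  exists (fun x => exists W, (is_open X W /\
            forall y : {x : X | P x}, W (proj1_sig y) -> exists V, F V /\ V y) /\ W x).
  split.
  - apply open_union; intros W [HW _]; exact HW.
  - intro y; split.
    + intros [V [FV Vy]]. destruct (HF V FV) as [W [HW HW']].
      exists W; split; [split; [exact HW|] | apply HW'; exact Vy].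
      intros z Wz; exists V; split; [exact FV | apply HW'; exact Wz].
    + intros [W [[_ HW] Wy]]. apply HW; exact Wy.
Qed.

Definition subspace {X : TopSpace} (P : X -> Prop) : TopSpace :=
  {| carrier := {x : X | P x};
     is_open := sub_open P;
     open_full := @sub_open_full X P;
     open_inter := @sub_open_inter X P;
     open_union := @sub_open_union X P |}.

Definition card {X : TopSpace} (x : X) : TopSpace := subspace (fun y : X => y <> x).

(* D(Z) = D(X): equality of the sets of homeomorphism classes of cards. *)
Definition same_deck (Z X : TopSpace) : Prop :=
  (forall z : Z, exists x : X, homeomorphic (card z) (card x)) /\
  (forall x : X, exists z : Z, homeomorphic (card z) (card x)).

Definition reconstruction (Z X : TopSpace) : Prop := same_deck Z X.

Definition reconstructible (X : TopSpace) : Prop :=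
  forall Z : TopSpace, reconstruction Z X -> homeomorphic Z X.

Definition metric_open (T : Type) (d : T -> T -> R) (U : T -> Prop) : Prop :=
  forall x, U x -> exists eps, 0 < eps /\ forall y, d x y < eps -> U y.

Lemma metric_open_full T (d : T -> T -> R) : metric_open d (fun _ => True).
Proof. intros x _; exists 1; split; [lra | auto]. Qed.

Lemma metric_open_inter T (d : T -> T -> R) U V :
  metric_open d U -> metric_open d V -> metric_open d (fun x => U x /\ V x).
Proof.
  intros HU HV x [Ux Vx].
  destruct (HU x Ux) as [e1 [He1 H1]]; destruct (HV x Vx) as [e2 [He2 H2]].
  exists (Rmin e1 e2); split; [apply Rmin_glb_lt; auto|].
  intros y Hy; split; [apply H1 | apply H2];
    eapply Rlt_le_trans; eauto; [apply Rmin_l | apply Rmin_r].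
Qed.

Lemma metric_open_union T (d : T -> T -> R) (F : (T -> Prop) -> Prop) :
  (forall U, F U -> metric_open d U) -> metric_open d (fun x => exists U, F U /\ U x).
Proof.
  intros HF x [U [FU Ux]]. destruct (HF U FU x Ux) as [e [He H]].
  exists e; split; [exact He|]. intros y Hy; exists U; split; auto.
Qed.

Definition metric_top (T : Type) (d : T -> T -> R) : TopSpace :=
  {| carrier := T;
     is_open := metric_open d;
     open_full := metric_open_full d;
     open_inter := @metric_open_inter T d;
     open_union := @metric_open_union T d |}.

Definition R_top : TopSpace := metric_top (fun x y : R => Rabs (x - y)).

Definition unit_interval : TopSpace := subspace (fun x : R_top => 0 <= x <= 1).

Definition euclid_pt (m : nat) := {x : nat -> R | forall k, (m <= k)%nat -> x k = 0}.

Definition euclid_dist (m : nat) (x y : euclid_pt m) : R :=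
  sqrt (sum_f_R0 (fun k => (proj1_sig x k - proj1_sig y k) ^ 2) (pred m)).

Definition euclid (m : nat) : TopSpace := metric_top (@euclid_dist m).

Definition sphere (n : nat) : TopSpace :=
  subspace (fun x : euclid (S n) => sum_f_R0 (fun k => proj1_sig x k ^ 2) n = 1).

From Stdlib Require Import Reals Lra Lia Psatz List Classical ClassicalEpsilon
  FunctionalExtensionality PropExtensionality ProofIrrelevance.
Open Scope R_scope.

(* Let Y be compact Hausdorff with at least three points, let [two] be a
   boolean, and assume: (i) some point p has arbitrarily small open
   neighbourhoods V such that V \ {p} is connected (two = false) or the union
   of two connected sets (two = true); (ii) every point c has arbitrarily small
   open neighbourhoods W, contained in compact sets avoiding any prescribed
   point, such that W clusters at c and, when two = true, W \ {c} splits
   into two disjoint open sets both clustering at c.  If Z has the deck of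
   Y, then Z is Hausdorff (its cards are); take a card homeomorphism
   f : Z \ {z} ~ Y \ {p}.  A second card transports (ii) to z, and (i) then
   forces small punctured neighbourhoods of p to be pulled back near z, so
   the extension of f by z |-> p is continuous both ways (by compactness of Y
   for one direction). *)

(** * General topology *)

Lemma open_ext (X : TopSpace) (A B : X -> Prop) :
  is_open X A -> (forall x, A x <-> B x) -> is_open X B.
Proof.
  intros H E. assert (A = B) as <-; auto.
  apply functional_extensionality; intro; apply propositional_extensionality; auto.
Qed.

Lemma open_union2 (X : TopSpace) (A B : X -> Prop) :
  is_open X A -> is_open X B -> is_open X (fun x => A x \/ B x).
Proof.
  intros HA HB. apply open_ext with (fun x => exists U, (U = A \/ U = B) /\ U x).
  - apply open_union. intros U [-> | ->]; auto.
  - intro x; split.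
    + intros [U [[-> | ->] H]]; auto.
    + intros [H|H]; [exists A | exists B]; auto.
Qed.

Lemma open_local (X : TopSpace) (A : X -> Prop) :
  (forall x, A x -> exists U, is_open X U /\ U x /\ forall y, U y -> A y) -> is_open X A.
Proof.
  intros H. apply open_ext with (fun x => exists U, (is_open X U /\ forall y, U y -> A y) /\ U x).
  - apply open_union. intros U [HU _]; auto.
  - intro x; split.
    + intros [U [[_ HU] Ux]]; auto.
    + intros Ax. destruct (H x Ax) as [U [HU [Ux HUA]]]. exists U; auto.
Qed.

Definition closed (X : TopSpace) (C : X -> Prop) : Prop := is_open X (fun x => ~ C x).

Lemma closed_compl_open (X : TopSpace) (A : X -> Prop) : is_open X A -> closed X (fun x => ~ A x).
Proof. intros H. eapply open_ext; [exact H|]. intro; split; [tauto|apply NNPP]. Qed.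

Definition hausdorff (X : TopSpace) : Prop := forall x y : X, x <> y ->
  exists U V, is_open X U /\ is_open X V /\ U x /\ V y /\ forall t, U t -> V t -> False.

Definition compact (X : TopSpace) (K : X -> Prop) : Prop :=
  forall F : (X -> Prop) -> Prop, (forall U, F U -> is_open X U) ->
    (forall x, K x -> exists U, F U /\ U x) ->
    exists l, (forall U, In U l -> F U) /\ forall x, K x -> exists U, In U l /\ U x.

Definition connected (X : TopSpace) (S : X -> Prop) : Prop :=
  forall A B, is_open X A -> is_open X B -> (forall x, S x -> A x \/ B x) ->
    (forall x, S x -> A x -> B x -> False) ->
    (forall x, S x -> A x) \/ (forall x, S x -> B x).

Definition clusters_at (X : TopSpace) (S : X -> Prop) (c : X) : Prop :=
  forall O, is_open X O -> O c -> exists y, y <> c /\ S y /\ O y.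

Definition homeo_pair {X Y : TopSpace} (f : X -> Y) (g : Y -> X) : Prop :=
  continuous f /\ continuous g /\ (forall x, g (f x) = x) /\ (forall y, f (g y) = y).

Lemma homeo_pair_sym (X Y : TopSpace) (f : X -> Y) (g : Y -> X) :
  homeo_pair f g -> homeo_pair g f.
Proof. intros [? [? [? ?]]]; repeat split; auto. Qed.

Lemma list_pick {A B : Type} (R : A -> B -> Prop) (l : list A) :
  (forall a, In a l -> exists b, R a b) ->
  exists l', (forall b, In b l' -> exists a, In a l /\ R a b) /\
             (forall a, In a l -> exists b, In b l' /\ R a b).
Proof.
  induction l as [|a l IH]; intros H.
  - exists nil; split; intros ? [].
  - destruct (H a (or_introl eq_refl)) as [b Hb].
    destruct IH as [l' [H1 H2]]. { intros a' Ha'; apply H; right; auto. }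
    exists (b :: l'); split.
    + intros b' [<- | Hb']; [exists a; split; [left|]; auto|].
      destruct (H1 b' Hb') as [a' [? ?]]; exists a'; split; [right|]; auto.
    + intros a' [<- | Ha']; [exists b; split; [left|]; auto|].
      destruct (H2 a' Ha') as [b' [? ?]]; exists b'; split; [right|]; auto.
Qed.

Lemma hausdorff_T1 (X : TopSpace) : hausdorff X -> forall x : X, is_open X (fun y => y <> x).
Proof.
  intros H x. apply open_local. intros y Hy.
  destruct (H y x Hy) as [U [V [HU [HV [Uy [Vx D]]]]]].
  exists U; split; [|split]; auto. intros t Ut ->. eauto.
Qed.

Lemma compact_ext (X : TopSpace) (S T : X -> Prop) :
  compact X S -> (forall x, S x <-> T x) -> compact X T.
Proof.
  intros H E F HF Hc. destruct (H F HF) as [l [? Hl]].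
  - intros x Sx; apply Hc, E; auto.
  - exists l; split; auto. intros x Tx; apply Hl, E; auto.
Qed.

Lemma compact_closed (X : TopSpace) (K : X -> Prop) : hausdorff X -> compact X K -> closed X K.
Proof.
  intros HX HK. unfold closed. apply open_local. intros x Kx.
  set (F := fun U : X -> Prop => is_open X U /\ exists V, is_open X V /\ V x /\
              forall t, U t -> V t -> False).
  destruct (HK F) as [l [Hl Hcov]].
  - intros U [? _]; auto.
  - intros y Ky. assert (y <> x) by (intros ->; auto).
    destruct (HX y x H) as [U [V [HU [HV [Uy [Vx D]]]]]].
    exists U; split; auto. split; auto. exists V; auto.
  - assert (exists V, is_open X V /\ V x /\ forall U, In U l -> forall t, U t -> V t -> False)
      as [V [HV [Vx D]]].
    { clear Hcov. induction l as [|U l IH].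
      - exists (fun _ => True); split; [apply open_full|split; [auto|intros ? []]].
      - destruct IH as [V [HV [Vx D]]]. { intros; apply Hl; right; auto. }
        destruct (Hl U (or_introl eq_refl)) as [_ [V' [HV' [V'x D']]]].
        exists (fun t => V t /\ V' t); split; [apply open_inter; auto|split; auto].
        intros U0 [<- | HU0] t Ut [Vt V't]; eauto. }
    exists V; split; [|split]; auto. intros y Vy Ky.
    destruct (Hcov y Ky) as [U [HU Uy]]. eauto.
Qed.

Lemma compact_inter_closed (X : TopSpace) (K C : X -> Prop) :
  compact X K -> closed X C -> compact X (fun x => K x /\ C x).
Proof.
  intros HK HC F HF Hcov.
  destruct (HK (fun U => F U \/ (forall x, U x <-> ~ C x))) as [l [Hl Hc]].
  - intros U [HU|HU]; auto. eapply open_ext; [exact HC|]. intro; rewrite HU; tauto.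
  - intros x Kx. destruct (classic (C x)) as [Cx|Cx].
    + destruct (Hcov x (conj Kx Cx)) as [U [? ?]]; exists U; auto.
    + exists (fun x => ~ C x); split; auto. right; tauto.
  - destruct (classic (exists x, K x /\ C x)) as [[x0 [Kx0 Cx0]]|Hne].
    2:{ exists nil; split; [intros ? []|]. intros x Hx; exfalso; apply Hne; eauto. }
    destruct (Hcov x0 (conj Kx0 Cx0)) as [U0 [FU0 _]].
    destruct (list_pick (fun U U' => F U' /\ forall x, C x -> U x -> U' x) l) as [l' [H1 H2]].
    + intros U HU. destruct (Hl U HU) as [FU | HU'].
      * exists U; auto.
      * exists U0; split; auto. intros x Cx Ux. apply HU' in Ux; tauto.
    + exists l'; split.
      * intros U' HU'. destruct (H1 U' HU') as [U [_ [? _]]]; auto.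
      * intros x [Kx Cx]. destruct (Hc x Kx) as [U [HU Ux]].
        destruct (H2 U HU) as [U' [? [_ HUU']]]. exists U'; auto.
Qed.

Lemma compact_compl_open (X : TopSpace) (V : X -> Prop) :
  compact X (fun _ => True) -> is_open X V -> compact X (fun x => ~ V x).
Proof.
  intros HX HV. eapply compact_ext; [apply (compact_inter_closed _ _ _ HX (closed_compl_open _ _ HV))|].
  tauto.
Qed.

Lemma compact_image (X Y : TopSpace) (f : X -> Y) (K : X -> Prop) :
  continuous f -> compact X K -> compact Y (fun y => exists x, K x /\ f x = y).
Proof.
  intros Hf HK F HF Hcov.
  destruct (HK (fun U' => exists U, F U /\ forall x, U' x <-> U (f x))) as [l [Hl Hc]].
  - intros U' [U [FU HU]]. eapply open_ext; [apply Hf, HF, FU|]. intro; rewrite HU; tauto.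
  - intros x Kx. destruct (Hcov (f x) (ex_intro _ x (conj Kx eq_refl))) as [U [FU Ux]].
    exists (fun x => U (f x)); split; auto. exists U; split; auto; tauto.
  - destruct (list_pick (fun U' U => F U /\ forall x, U' x <-> U (f x)) l) as [l' [H1 H2]].
    + intros U' HU'. destruct (Hl U' HU') as [U ?]; eauto.
    + exists l'; split.
      * intros U HU. destruct (H1 U HU) as [? [_ [? _]]]; auto.
      * intros y [x [Kx <-]]. destruct (Hc x Kx) as [U' [HU' U'x]].
        destruct (H2 U' HU') as [U [? [_ HU]]]. exists U; split; auto. apply HU; auto.
Qed.

Lemma incl_continuous (X : TopSpace) (P : X -> Prop) :
  @continuous (subspace P) X (@proj1_sig _ _).
Proof. intros U HU. exists U; split; auto; tauto. Qed.

Lemma sub_eq (X : TopSpace) (P : X -> Prop) (u v : subspace P) :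
  proj1_sig u = proj1_sig v -> u = v.
Proof. destruct u, v; simpl; intros ->; f_equal; apply proof_irrelevance. Qed.

Lemma sig_eta {X : TopSpace} (P : X -> Prop) (u : subspace P) :
  exist P (proj1_sig u) (proj2_sig u) = u.
Proof. destruct u; reflexivity. Qed.

Lemma compact_sub_amb (X : TopSpace) (P : X -> Prop) (K : subspace P -> Prop) :
  compact (subspace P) K -> compact X (fun x => exists H : P x, K (exist _ x H)).
Proof.
  intros HK. eapply compact_image in HK; [|apply incl_continuous].
  eapply compact_ext; [exact HK|]. intro x; split.
  - intros [[y Py] [Ky <-]]; eauto.
  - intros [Px Kx]. exists (exist _ x Px); auto.
Qed.

Lemma compact_amb_sub (X : TopSpace) (P : X -> Prop) (K : subspace P -> Prop) :
  compact X (fun x => exists H : P x, K (exist _ x H)) -> compact (subspace P) K.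
Proof.
  intros HK F HF Hcov.
  destruct (HK (fun U => is_open X U /\
                  exists V, F V /\ forall y : subspace P, V y <-> U (proj1_sig y)))
    as [l [Hl Hc]].
  - intros U [? _]; auto.
  - intros x [H Kx]. destruct (Hcov _ Kx) as [V [FV Vx]].
    destruct (HF V FV) as [U [HU HUV]]. exists U; split; [split; eauto|]. apply HUV in Vx; auto.
  - destruct (list_pick (fun U V => F V /\ forall y : subspace P, V y <-> U (proj1_sig y)) l)
      as [l' [H1 H2]].
    + intros U HU. destruct (Hl U HU) as [_ [V ?]]; eauto.
    + exists l'; split.
      * intros V HV. destruct (H1 V HV) as [? [_ [? _]]]; auto.
      * intros [x H] Kx. destruct (Hc x (ex_intro _ H Kx)) as [U [HU Ux]].
        destruct (H2 U HU) as [V [? [_ HV]]]. exists V; split; auto. apply HV; auto.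
Qed.

Lemma hausdorff_inj (X Y : TopSpace) (f : X -> Y) :
  continuous f -> (forall a b, f a = f b -> a = b) -> hausdorff Y -> hausdorff X.
Proof.
  intros Hf Hi HY x y Hxy.
  destruct (HY (f x) (f y)) as [U [V [HU [HV [Ux [Vy D]]]]]].
  - intro E; apply Hxy, Hi, E.
  - exists (fun t => U (f t)), (fun t => V (f t)); repeat split; auto.
    intros t; apply D.
Qed.

Lemma hausdorff_sub (X : TopSpace) (P : X -> Prop) : hausdorff X -> hausdorff (subspace P).
Proof.
  apply hausdorff_inj with (@proj1_sig _ _); [apply incl_continuous|].
  intros u v; apply sub_eq.
Qed.

Lemma connected_ext (X : TopSpace) (S T : X -> Prop) :
  connected X S -> (forall x, S x <-> T x) -> connected X T.
Proof.
  intros H E A B HA HB Hc Hd. destruct (H A B HA HB) as [H'|H'].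
  - intros x Sx; apply Hc, E; auto.
  - intros x Sx; apply Hd, E; auto.
  - left; intros x Tx; apply H', E; auto.
  - right; intros x Tx; apply H', E; auto.
Qed.

Lemma connected_image (X Y : TopSpace) (f : X -> Y) (S : X -> Prop) :
  continuous f -> connected X S -> connected Y (fun y => exists x, S x /\ f x = y).
Proof.
  intros Hf HS A B HA HB Hcov Hdis.
  destruct (HS (fun x => A (f x)) (fun x => B (f x))) as [H|H]; auto.
  - intros x Sx. apply Hcov; eauto.
  - intros x Sx. apply Hdis; eauto.
  - left. intros y [x [Sx <-]]. auto.
  - right. intros y [x [Sx <-]]. auto.
Qed.

Lemma connected_sub_amb (X : TopSpace) (P : X -> Prop) (S : subspace P -> Prop) :
  connected (subspace P) S -> connected X (fun x => exists H : P x, S (exist _ x H)).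
Proof.
  intros HS. apply (connected_image _ _ _ _ (incl_continuous X P)) in HS.
  eapply connected_ext; [exact HS|]. intro x; split.
  - intros [[y Py] [Sy <-]]; eauto.
  - intros [Px Sx]. exists (exist _ x Px); auto.
Qed.

Lemma connected_amb_sub (X : TopSpace) (P : X -> Prop) (S : subspace P -> Prop) :
  connected X (fun x => exists H : P x, S (exist _ x H)) -> connected (subspace P) S.
Proof.
  intros HS A B [A' [HA' EA]] [B' [HB' EB]] Hc Hd.
  destruct (HS A' B' HA' HB') as [H|H].
  - intros x [Px Sx]. destruct (Hc _ Sx);
      [left; apply (EA (exist _ x Px)) | right; apply (EB (exist _ x Px))]; auto.
  - intros x [Px Sx] HA1 HB1.
    apply (Hd _ Sx); [apply (EA (exist _ x Px)) | apply (EB (exist _ x Px))]; auto.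
  - left. intros [x Px] Sx. apply EA, H; eauto.
  - right. intros [x Px] Sx. apply EB, H; eauto.
Qed.

Lemma connected_chain (X : TopSpace) (S : X -> Prop) :
  (forall x y, S x -> S y -> exists T, connected X T /\ (forall t, T t -> S t) /\ T x /\ T y) ->
  connected X S.
Proof.
  intros H A B HA HB Hc Hd.
  destruct (classic (exists x, S x /\ A x)) as [[x [Sx Ax]]|Hn].
  - left. intros y Sy. destruct (H x y Sx Sy) as [T [HT [TS [Tx Ty]]]].
    destruct (HT A B HA HB) as [H'|H'].
    + intros t Tt; apply Hc; auto.
    + intros t Tt; apply Hd; auto.
    + auto.
    + exfalso. apply (Hd x); auto.
  - right. intros y Sy. destruct (Hc y Sy); auto. exfalso; eauto.
Qed.

Lemma connected_union2 (X : TopSpace) (S T : X -> Prop) :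
  connected X S -> connected X T -> (exists x, S x /\ T x) ->
  connected X (fun x => S x \/ T x).
Proof.
  intros HS HT [x0 [Sx0 Tx0]] A B HA HB Hc Hd.
  assert (H1 : (forall x, S x -> A x) \/ (forall x, S x -> B x)).
  { apply HS; [exact HA | exact HB | intros x Sx; apply Hc | intros x Sx; apply (Hd x)]; auto. }
  assert (H2 : (forall x, T x -> A x) \/ (forall x, T x -> B x)).
  { apply HT; [exact HA | exact HB | intros x Tx; apply Hc | intros x Tx; apply (Hd x)]; auto. }
  destruct H1 as [H1|H1]; destruct H2 as [H2|H2].
  - left; intros x [?|?]; auto.
  - exfalso; apply (Hd x0); auto.
  - exfalso; apply (Hd x0); auto.
  - right; intros x [?|?]; auto.
Qed.

(** * Transport of subsets along a homeomorphism between cards *)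

Definition card_preimage {X1 X2 : TopSpace} {a : X1} {b : X2}
  (h : card a -> card b) (S : X2 -> Prop) : X1 -> Prop :=
  fun t => exists H : t <> a, S (proj1_sig (h (exist _ t H))).

Section CardTransport.
Variables (X1 X2 : TopSpace) (a : X1) (b : X2) (h : card a -> card b) (hi : card b -> card a).
Hypothesis h_homeo : homeo_pair h hi.

Lemma card_preimage_iff (S : X2 -> Prop) t (H : t <> a) :
  card_preimage h S t <-> S (proj1_sig (h (exist _ t H))).
Proof.
  split; [intros [H' HS] | intros HS; exists H; auto].
  replace H with H' by apply proof_irrelevance; auto.
Qed.

Lemma card_roundtrip u (H : proj1_sig (h u) <> b) : hi (exist _ (proj1_sig (h u)) H) = u.
Proof.
  destruct h_homeo as [_ [_ [K1 _]]].
  transitivity (hi (h u)); [f_equal; apply sub_eq; reflexivity | apply K1].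
Qed.

Lemma card_preimage_inv (S : X2 -> Prop) v :
  card_preimage h S (proj1_sig (hi v)) <-> S (proj1_sig v).
Proof.
  destruct h_homeo as [_ [_ [_ K2]]].
  rewrite (card_preimage_iff S _ (proj2_sig (hi v))), sig_eta, K2. tauto.
Qed.

(* Preimages of open sets are open: the card is an open subspace when [X1] is T1. *)
Lemma card_preimage_open (S : X2 -> Prop) :
  hausdorff X1 -> is_open X2 S -> is_open X1 (card_preimage h S).
Proof.
  intros H1 HS. destruct h_homeo as [Hh _].
  assert (HS' : is_open (card b) (fun v => S (proj1_sig v))) by (exists S; split; auto; tauto).
  destruct (Hh _ HS') as [O [HO EO]].
  eapply open_ext; [apply open_inter; [exact HO | apply (hausdorff_T1 _ H1 a)]|].
  intro t; split.
  - intros [Ot Ht]. exists Ht. apply (EO (exist _ t Ht)); auto.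
  - intros [Ht St]. split; auto. apply (EO (exist _ t Ht)); auto.
Qed.

Lemma card_preimage_as_image (S : X2 -> Prop) :
  (forall y, S y -> y <> b) ->
  forall t, card_preimage h S t <->
    exists H : t <> a, exists v : card b, S (proj1_sig v) /\ hi v = exist _ t H.
Proof.
  destruct h_homeo as [_ [_ [K1 K2]]]. intros Sb t. split.
  - intros [Ht St]. exists Ht, (h (exist _ t Ht)). auto.
  - intros [Ht [v [Sv Ev]]]. exists Ht. rewrite <- Ev, K2; auto.
Qed.

Lemma card_preimage_compact (S : X2 -> Prop) :
  compact X2 S -> (forall y, S y -> y <> b) -> compact X1 (card_preimage h S).
Proof.
  intros HS Sb. destruct h_homeo as [_ [Hhi _]].
  assert (H1 : compact (card b) (fun v => S (proj1_sig v))).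
  { apply compact_amb_sub. eapply compact_ext; [exact HS|]. intro y; split.
    - intros Sy; exists (Sb y Sy); auto.
    - intros [Hy Sy]; auto. }
  apply (compact_image _ _ hi _ Hhi), compact_sub_amb in H1.
  eapply compact_ext; [exact H1|]. intro t. rewrite (card_preimage_as_image S Sb t).
  split; intros [Ht [v [Sv Ev]]]; eauto.
Qed.

Lemma card_preimage_connected (S : X2 -> Prop) :
  connected X2 S -> (forall y, S y -> y <> b) -> connected X1 (card_preimage h S).
Proof.
  intros HS Sb. destruct h_homeo as [_ [Hhi _]].
  assert (H1 : connected (card b) (fun v => S (proj1_sig v))).
  { apply connected_amb_sub. eapply connected_ext; [exact HS|]. intro y; split.
    - intros Sy; exists (Sb y Sy); auto.
    - intros [Hy Sy]; auto. }
  apply (connected_image _ _ hi _ Hhi), connected_sub_amb in H1.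
  eapply connected_ext; [exact H1|]. intro t. rewrite (card_preimage_as_image S Sb t).
  split; intros [Ht [v [Sv Ev]]]; eauto.
Qed.

End CardTransport.

Lemma card_preimage_accum (X1 X2 : TopSpace) (a : X1) (b : X2)
  (h : card a -> card b) (hi : card b -> card a) (S : X2 -> Prop) (t0 : X1) (H0 : t0 <> a) :
  homeo_pair h hi -> hausdorff X2 ->
  clusters_at X2 S (proj1_sig (h (exist _ t0 H0))) -> (forall y, S y -> y <> b) ->
  clusters_at X1 (card_preimage h S) t0.
Proof.
  intros Hom HX2 HS Sb O HO Ot0.
  assert (Hom' := homeo_pair_sym _ _ _ _ Hom). destruct Hom as [_ [_ [K1 K2]]].
  destruct (HS (card_preimage hi O)) as [y [Hyc [Sy [Hy Oy]]]].
  - apply (card_preimage_open _ _ _ _ _ _ Hom'); auto.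
  - exists (proj2_sig (h (exist _ t0 H0))). rewrite sig_eta, K1. exact Ot0.
  - exists (proj1_sig (hi (exist _ y Hy))). split; [|split].
    + intro E. apply Hyc.
      assert (E2 : exist (fun t => t <> a) t0 H0 = hi (exist _ y Hy)) by (apply sub_eq; auto).
      rewrite E2, K2; reflexivity.
    + exists (proj2_sig (hi (exist _ y Hy))). rewrite sig_eta, K2; exact Sy.
    + exact Oy.
Qed.

(** * An abstract reconstruction criterion *)

Definition punctured_pieces (Y : TopSpace) (two : bool) (p : Y) (V : Y -> Prop) : Prop :=
  if two then exists P1 P2, connected Y P1 /\ connected Y P2 /\
      (forall y, P1 y -> V y /\ y <> p) /\ (forall y, P2 y -> V y /\ y <> p) /\
      (forall y, V y -> y <> p -> P1 y \/ P2 y)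
  else connected Y (fun y => V y /\ y <> p).

Definition small_pieces_at (Y : TopSpace) (two : bool) (p : Y) : Prop :=
  forall V0, is_open Y V0 -> V0 p ->
    exists V, is_open Y V /\ V p /\ (forall y, V y -> V0 y) /\ punctured_pieces Y two p V.

Definition split_at (Y : TopSpace) (two : bool) (c : Y) (W : Y -> Prop) : Prop :=
  clusters_at Y W c /\
  (if two then exists W1 W2, is_open Y W1 /\ is_open Y W2 /\
      (forall y, W1 y -> W y) /\ (forall y, W2 y -> W y) /\
      (forall y, W y -> y <> c -> W1 y \/ W2 y) /\ (forall y, W1 y -> W2 y -> False) /\
      clusters_at Y W1 c /\ clusters_at Y W2 c
   else True).

Definition split_nbhds (Y : TopSpace) (two : bool) : Prop :=
  forall c x : Y, c <> x -> forall U, is_open Y U -> U c ->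
    exists W K, is_open Y W /\ W c /\ (forall y, W y -> U y) /\ compact Y K /\
      (forall y, W y -> K y) /\ (forall y, K y -> y <> x) /\ split_at Y two c W.

Definition three_points (Y : TopSpace) : Prop :=
  exists y1 y2 y3 : Y, y1 <> y2 /\ y1 <> y3 /\ y2 <> y3.

Lemma card_two_points (Y : TopSpace) (x : Y) :
  three_points Y -> exists u1 u2 : card x, u1 <> u2.
Proof.
  intros [y1 [y2 [y3 [N12 [N13 N23]]]]].
  assert (Hne : forall y y' (Hy : y <> x) (Hy' : y' <> x), y <> y' ->
            exist (fun t => t <> x) y Hy <> exist _ y' Hy')
    by (intros y y' Hy Hy' N E; apply N; apply (f_equal (@proj1_sig _ _)) in E; exact E).
  destruct (classic (y1 = x)) as [->|H1].
  - exists (exist _ y2 (fun E => N12 (eq_sym E))), (exist _ y3 (fun E => N13 (eq_sym E))); auto.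
  - destruct (classic (y2 = x)) as [->|H2].
    + exists (exist _ y1 H1), (exist _ y3 (fun E => N23 (eq_sym E))); auto.
    + exists (exist _ y1 H1), (exist _ y2 H2); auto.
Qed.

Lemma avoid_two_points (Z Y : TopSpace) :
  (forall z : Z, exists x : Y, homeomorphic (card z) (card x)) -> three_points Y ->
  forall a b : Z, exists w, w <> a /\ w <> b.
Proof.
  intros D T a b.
  destruct (D a) as [x [g [gi [_ [_ [K1 K2]]]]]].
  destruct (card_two_points Y x T) as [u1 [u2 N]].
  destruct (classic (proj1_sig (gi u1) = b)) as [E1|E1].
  - exists (proj1_sig (gi u2)). split; [exact (proj2_sig (gi u2))|].
    intro E2. apply N. rewrite <- (K2 u1), <- (K2 u2). f_equal. apply sub_eq. congruence.
  - exists (proj1_sig (gi u1)). split; [exact (proj2_sig (gi u1))|auto].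
Qed.

(* A space all of whose cards are Hausdorff, and which has a third point besides
   any two, is Hausdorff: separate [a] and [b] inside the card of a third point. *)
Lemma hausdorff_of_cards (Z : TopSpace) :
  (forall w : Z, hausdorff (card w)) -> (forall a b : Z, exists w, w <> a /\ w <> b) ->
  hausdorff Z.
Proof.
  intros Hc Third a b Hab.
  destruct (Third a b) as [w [Hwa Hwb]].
  set (a' := exist (fun t => t <> w) a (fun E => Hwa (eq_sym E))).
  set (b' := exist (fun t => t <> w) b (fun E => Hwb (eq_sym E))).
  destruct (Hc w a' b') as [U [V [[U0 [HU0 EU]] [[V0 [HV0 EV]] [Ua [Vb Dis]]]]]].
  { intro E; apply Hab; apply (f_equal (@proj1_sig _ _)) in E; exact E. }
  assert (Hw : is_open Z (fun t => t <> w)).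
  { apply open_local. intros t Htw.
    destruct (Third t w) as [w' [Hw't Hw'w]].
    set (t' := exist (fun s => s <> w') t (fun E => Hw't (eq_sym E))).
    set (w'' := exist (fun s => s <> w') w (fun E => Hw'w (eq_sym E))).
    destruct (Hc w' t' w'') as [U1 [V1 [[U2 [HU2 EU1]] [_ [Ut [Vw Dis1]]]]]].
    { intro E; apply Htw; apply (f_equal (@proj1_sig _ _)) in E; exact E. }
    exists U2; split; [exact HU2|split; [apply (EU1 t'); auto|]].
    intros y U2y ->. apply (Dis1 w''); auto. apply (EU1 w''); auto. }
  exists (fun t => U0 t /\ t <> w), (fun t => V0 t /\ t <> w).
  split; [apply open_inter; auto|split; [apply open_inter; auto|]].
  split; [split; [apply (EU a'); auto | auto]|].
  split; [split; [apply (EV b'); auto | auto]|].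
  intros t [U0t Htw] [V0t _].
  apply (Dis (exist _ t Htw)); [apply (EU (exist _ t Htw)) | apply (EV (exist _ t Htw))]; auto.
Qed.

Lemma reconstruction_hausdorff (Z Y : TopSpace) :
  hausdorff Y -> three_points Y ->
  (forall z : Z, exists x : Y, homeomorphic (card z) (card x)) -> hausdorff Z.
Proof.
  intros HY T D. apply hausdorff_of_cards; [|exact (avoid_two_points Z Y D T)].
  intros w. destruct (D w) as [x [g [gi [Hg [_ [K1 _]]]]]].
  apply (hausdorff_inj _ _ g Hg); [|apply hausdorff_sub; auto].
  intros u v E; rewrite <- (K1 u), <- (K1 v), E; auto.
Qed.

Lemma inverse_continuous (Y Z : TopSpace) (g : Y -> Z) (f : Z -> Y) :
  compact Y (fun _ => True) -> hausdorff Z -> continuous g ->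
  (forall t, g (f t) = t) -> (forall y, f (g y) = y) -> continuous f.
Proof.
  intros HY HZ Hg GF FG V HV.
  assert (Hc : compact Z (fun t => exists y, ~ V y /\ g y = t))
    by (apply compact_image; auto; apply compact_compl_open; auto).
  eapply open_ext; [apply (compact_closed _ _ HZ Hc)|].
  intro t; split.
  - intros Hn. apply NNPP. intro NV. apply Hn. exists (f t); split; auto.
  - intros Vt [y [Vy <-]]. rewrite FG in Vt. auto.
Qed.

Definition extend_card {Z Y : TopSpace} {z : Z} {p : Y} (f : card z -> card p) (t : Z) : Y :=
  match excluded_middle_informative (t = z) with
  | left _ => p
  | right H => proj1_sig (f (exist _ t H))
  end.

Lemma extend_card_at {Z Y : TopSpace} {z : Z} {p : Y} (f : card z -> card p) :
  extend_card f z = p.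
Proof. unfold extend_card. destruct (excluded_middle_informative (z = z)); congruence. Qed.

Lemma extend_card_off {Z Y : TopSpace} {z : Z} {p : Y} (f : card z -> card p) t (H : t <> z) :
  extend_card f t = proj1_sig (f (exist _ t H)).
Proof.
  unfold extend_card. destruct (excluded_middle_informative (t = z)); [congruence|].
  do 3 f_equal. apply proof_irrelevance.
Qed.

Lemma extend_card_inv {Z Y : TopSpace} {z : Z} {p : Y} (f : card z -> card p) (fi : card p -> card z) :
  (forall u, fi (f u) = u) -> forall t, extend_card fi (extend_card f t) = t.
Proof.
  intros K1 t. destruct (classic (t = z)) as [->|H].
  - rewrite !extend_card_at; auto.
  - rewrite (extend_card_off f t H), (extend_card_off fi _ (proj2_sig (f (exist _ t H)))).
    rewrite sig_eta, K1; reflexivity.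
Qed.

Definition germ_control {Z Y : TopSpace} {z : Z} {p : Y} (fi : card p -> card z) : Prop :=
  forall U, is_open Z U -> U z ->
    exists V, is_open Y V /\ V p /\ forall y (H : y <> p), V y -> U (proj1_sig (fi (exist _ y H))).

Lemma extend_card_continuous (Y Z : TopSpace) (p : Y) (z : Z) (fi : card p -> card z) :
  hausdorff Y -> continuous fi -> germ_control fi -> continuous (extend_card fi).
Proof.
  intros HY Hfi HA U HU.
  assert (HU' : is_open (card z) (fun u => U (proj1_sig u))) by (exists U; split; auto; tauto).
  destruct (Hfi _ HU') as [O [HO EO]].
  assert (E1 : forall y (H : y <> p), U (extend_card fi y) <-> O y).
  { intros y H. rewrite (extend_card_off fi y H). apply (EO (exist _ y H)). }
  assert (Hoff : is_open Y (fun y => O y /\ y <> p))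
    by (apply open_inter; [exact HO | apply (hausdorff_T1 _ HY p)]).
  destruct (classic (U z)) as [Uz|Uz].
  - destruct (HA U HU Uz) as [V [HV [Vp HVU]]].
    eapply open_ext; [apply (open_union2 _ _ _ Hoff HV)|].
    intro y. destruct (classic (y = p)) as [->|H].
    + rewrite extend_card_at. tauto.
    + rewrite (E1 y H). split; [intros [[? ?]|Vy]; auto | intros; left; auto].
      rewrite <- (E1 y H), (extend_card_off fi y H). apply HVU; auto.
  - eapply open_ext; [exact Hoff|].
    intro y. destruct (classic (y = p)) as [->|H].
    + rewrite extend_card_at. tauto.
    + rewrite (E1 y H). tauto.
Qed.

Lemma extend_card_homeo (Y Z : TopSpace) (p : Y) (z : Z) (f : card z -> card p) (fi : card p -> card z) :
  compact Y (fun _ => True) -> hausdorff Y -> hausdorff Z -> homeo_pair f fi ->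
  germ_control fi -> homeomorphic Z Y.
Proof.
  intros HYc HY HZ [Hf [Hfi [K1 K2]]] HA.
  assert (GF := extend_card_inv f fi K1). assert (FG := extend_card_inv fi f K2).
  assert (CG : continuous (extend_card fi)) by (apply extend_card_continuous; auto).
  exists (extend_card f), (extend_card fi).
  repeat split; auto. apply (inverse_continuous _ _ (extend_card fi)); auto.
Qed.

Lemma split_at_preimage (Y Z : TopSpace) (two : bool) (w z : Z) (x : Y)
  (h : card w -> card x) (hi : card x -> card w) (Hzw : z <> w) (W : Y -> Prop) :
  hausdorff Y -> hausdorff Z -> homeo_pair h hi -> (forall y, W y -> y <> x) ->
  split_at Y two (proj1_sig (h (exist _ z Hzw))) W -> split_at Z two z (card_preimage h W).
Proof.
  intros HY HZ Hom Wx [AW HW]. pose proof Hom as [_ [_ [K1 _]]].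
  split; [apply (card_preimage_accum _ _ _ _ h hi W z Hzw); auto|].
  destruct two; [|exact I].
  destruct HW as [W1 [W2 [HW1 [HW2 [W1W [W2W [Wcov [Wdis [A1 A2]]]]]]]]].
  exists (card_preimage h W1), (card_preimage h W2).
  split; [apply (card_preimage_open _ _ _ _ _ _ Hom); auto|].
  split; [apply (card_preimage_open _ _ _ _ _ _ Hom); auto|].
  split; [intros t [Ht Wt]; exists Ht; auto|].
  split; [intros t [Ht Wt]; exists Ht; auto|].
  split.
  { intros t [Ht Wt] Htz. destruct (Wcov _ Wt) as [H1|H1].
    - intro E. apply Htz.
      assert (E2 : h (exist _ t Ht) = h (exist _ z Hzw)) by (apply sub_eq; exact E).
      apply (f_equal hi) in E2. rewrite !K1 in E2.
      apply (f_equal (@proj1_sig _ _)) in E2. exact E2.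
    - left; exists Ht; auto.
    - right; exists Ht; auto. }
  split.
  { intros t [H1 a1] [H2 a2]. replace H2 with H1 in a2 by apply proof_irrelevance. eauto. }
  split; apply (card_preimage_accum _ _ _ _ h hi _ z Hzw); auto.
Qed.

Lemma reconstruction_split_nbhds (Y Z : TopSpace) (two : bool) (w z : Z) (x : Y)
  (h : card w -> card x) (hi : card x -> card w) :
  hausdorff Y -> hausdorff Z -> homeo_pair h hi -> z <> w -> split_nbhds Y two ->
  forall U, is_open Z U -> U z ->
    exists W K, is_open Z W /\ W z /\ (forall t, W t -> U t) /\ compact Z K /\
      (forall t, W t -> K t) /\ split_at Z two z W.
Proof.
  intros HY HZ Hom Hzw Hloc U HU Uz.
  assert (Hom' := homeo_pair_sym _ _ _ _ Hom).
  set (c := proj1_sig (h (exist _ z Hzw))).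
  destruct (Hloc c x (proj2_sig (h (exist _ z Hzw))) (card_preimage hi U))
    as [W [K [HW [Wc [WU [HK [WK [Kx HLW]]]]]]]].
  { apply (card_preimage_open _ _ _ _ _ _ Hom'); auto. }
  { exists (proj2_sig (h (exist _ z Hzw))). unfold c. rewrite (card_roundtrip _ _ _ _ _ _ Hom). exact Uz. }
  exists (card_preimage h W), (card_preimage h K).
  split; [apply (card_preimage_open _ _ _ _ _ _ Hom); auto|].
  split; [exists Hzw; exact Wc|].
  split.
  { intros t [Ht Wt]. destruct (WU _ Wt) as [H' Ut].
    rewrite (card_roundtrip _ _ _ _ _ _ Hom) in Ut. exact Ut. }
  split; [apply (card_preimage_compact _ _ _ _ _ _ Hom); auto|].
  split; [intros t [Ht Wt]; exists Ht; auto|].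
  apply (split_at_preimage Y Z two w z x h hi Hzw); auto.
Qed.

(* An open [V ∋ p] missing the
   compact image of [K \ W] has every connected piece of [V \ {p}] pulled back
   either into [W] ("good") or off [K] ("bad"); clustering of [W] at [z] rules
   out bad pieces, so [V \ {p}] is pulled back into [W]. *)
Section GermControl.
Variables (Y Z : TopSpace) (p : Y) (z : Z) (f : card z -> card p) (fi : card p -> card z).
Hypotheses (Y_compact : compact Y (fun _ => True)) (Z_haus : hausdorff Z)
  (f_homeo : homeo_pair f fi).
Variables (W K : Z -> Prop) (V : Y -> Prop).
Hypotheses (W_open : is_open Z W) (K_compact : compact Z K) (W_K : forall t, W t -> K t)
  (V_open : is_open Y V) (V_avoid : forall y, V y -> ~ card_preimage fi (fun t => K t /\ ~ W t) y).

Lemma piece_good_or_bad (Q : Y -> Prop) :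
  connected Y Q -> (forall y, Q y -> V y /\ y <> p) ->
  (forall t, card_preimage f Q t -> W t) \/ (forall t, card_preimage f Q t -> ~ K t).
Proof.
  intros HQ QV. pose proof f_homeo as [_ [_ [K1 _]]].
  assert (HQz : connected Z (card_preimage f Q))
    by (apply (card_preimage_connected _ _ _ _ _ _ f_homeo); auto; apply QV).
  apply HQz; [exact W_open | exact (compact_closed _ _ Z_haus K_compact) | |].
  - intros t [Ht Qt]. destruct (classic (K t)) as [Kt|Kt]; [|right; auto].
    destruct (classic (W t)) as [Wt|Wt]; [left; auto|].
    exfalso. apply (V_avoid (proj1_sig (f (exist _ t Ht)))); [apply QV; auto|].
    exists (proj2_sig (f (exist _ t Ht))). rewrite sig_eta, K1. split; auto.
  - intros t _ Wt Kt. apply Kt, W_K, Wt.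
Qed.

(* A set clustering at [z] has points sent into [V] (the points sent outside
   [V] form a compact set missing [z]). *)
Lemma accum_meets_V (S : Z -> Prop) :
  V p -> clusters_at Z S z -> exists t (Ht : t <> z), S t /\ V (proj1_sig (f (exist _ t Ht))).
Proof.
  intros Vp HS.
  assert (HLz : compact Z (card_preimage f (fun y => ~ V y))).
  { apply (card_preimage_compact _ _ _ _ _ _ f_homeo); [apply compact_compl_open; auto|].
    intros y Vy ->; auto. }
  destruct (HS _ (compact_closed _ _ Z_haus HLz)) as [t [Htz [St Lt]]].
  { intros [H _]; auto. }
  exists t, Htz. split; auto. apply NNPP. intro NV. apply Lt. exists Htz; auto.
Qed.

Lemma no_bad_piece (Qb Qg : Y -> Prop) (Wa Wb : Z -> Prop) :
  V p -> (forall t, card_preimage f Qb t -> ~ K t) ->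
  (forall t, card_preimage f Qg t -> Wa t) -> (forall t, Wa t -> Wb t -> False) ->
  clusters_at Z Wb z -> (forall t, Wb t -> W t) ->
  (forall y, V y -> y <> p -> Qb y \/ Qg y) -> False.
Proof.
  intros Vp Bad Good Dab AWb WbW Cov.
  destruct (accum_meets_V Wb Vp AWb) as [t [Ht [Wt Vt]]].
  destruct (Cov _ Vt (proj2_sig (f (exist _ t Ht)))) as [Q1|Q1].
  - apply (Bad t); [exists Ht; auto | apply W_K, WbW; auto].
  - apply (Dab t); [apply Good; exists Ht; auto | auto].
Qed.

Lemma good_piece_one_side (Q : Y -> Prop) (W1 W2 : Z -> Prop) :
  is_open Z W1 -> is_open Z W2 -> (forall t, W t -> t <> z -> W1 t \/ W2 t) ->
  (forall t, W1 t -> W2 t -> False) ->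
  connected Y Q -> (forall y, Q y -> V y /\ y <> p) -> (forall t, card_preimage f Q t -> W t) ->
  (forall t, card_preimage f Q t -> W1 t) \/ (forall t, card_preimage f Q t -> W2 t).
Proof.
  intros HW1 HW2 Wsplit Wdis HQ QV Good.
  assert (HQz : connected Z (card_preimage f Q))
    by (apply (card_preimage_connected _ _ _ _ _ _ f_homeo); auto; apply QV).
  apply HQz; auto.
  - intros t Qt. apply Wsplit; [apply Good; auto | destruct Qt; auto].
  - intros t _; apply Wdis.
Qed.

Lemma punctured_V_into_W (two : bool) :
  V p -> punctured_pieces Y two p V -> split_at Z two z W ->
  forall y (H : y <> p), V y -> W (proj1_sig (fi (exist _ y H))).
Proof.
  intros Vp HP [AW HW].
  assert (Pull : forall Q, (forall t, card_preimage f Q t -> W t) ->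
            forall y (H : y <> p), Q y -> W (proj1_sig (fi (exist _ y H))))
    by (intros Q HQ y H Qy; apply HQ, (card_preimage_inv _ _ _ _ _ _ f_homeo); exact Qy).
  assert (NotK : forall t, ~ K t -> W t -> False) by auto.
  destruct two.
  2:{ destruct (piece_good_or_bad _ HP (fun y H => H)) as [G|B].
      - intros y H Vy. apply (Pull _ G y H). split; auto.
      - exfalso. apply (no_bad_piece _ _ (fun t => ~ K t) W Vp B B NotK AW); auto. }
  destruct HP as [P1 [P2 [C1 [C2 [P1V [P2V Pcov]]]]]].
  destruct HW as [W1 [W2 [HW1 [HW2 [W1W [W2W [Wcov [Wdis [A1 A2]]]]]]]]].
  assert (Wdis' : forall t, W2 t -> W1 t -> False) by eauto.
  assert (Pcov' : forall y, V y -> y <> p -> P2 y \/ P1 y)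
    by (intros y Vy Hy; destruct (Pcov y Vy Hy); auto).
  destruct (piece_good_or_bad P1 C1 P1V) as [G1|B1];
  destruct (piece_good_or_bad P2 C2 P2V) as [G2|B2].
  - intros y H Vy. destruct (Pcov y Vy H); [apply (Pull P1 G1) | apply (Pull P2 G2)]; auto.
  - exfalso. destruct (good_piece_one_side P1 W1 W2 HW1 HW2 Wcov Wdis C1 P1V G1) as [S|S].
    + apply (no_bad_piece P2 P1 W1 W2); auto.
    + apply (no_bad_piece P2 P1 W2 W1); auto.
  - exfalso. destruct (good_piece_one_side P2 W1 W2 HW1 HW2 Wcov Wdis C2 P2V G2) as [S|S].
    + apply (no_bad_piece P1 P2 W1 W2); auto.
    + apply (no_bad_piece P1 P2 W2 W1); auto.
  - exfalso. apply (no_bad_piece P1 P2 (fun t => ~ K t) W1); auto.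
Qed.

End GermControl.

Lemma germ_control_of_split (Y Z : TopSpace) (two : bool) (p : Y) (z : Z)
  (f : card z -> card p) (fi : card p -> card z) :
  compact Y (fun _ => True) -> hausdorff Y -> hausdorff Z -> homeo_pair f fi ->
  small_pieces_at Y two p ->
  (forall U, is_open Z U -> U z ->
    exists W K, is_open Z W /\ W z /\ (forall t, W t -> U t) /\ compact Z K /\
      (forall t, W t -> K t) /\ split_at Z two z W) ->
  germ_control fi.
Proof.
  intros HYc HY HZ Hom Hp Hz U HU Uz.
  destruct (Hz U HU Uz) as [W [K [HW [Wz [WU [HK [WK HS]]]]]]].
  set (D := fun t => K t /\ ~ W t).
  assert (HD : compact Z D) by (apply compact_inter_closed; auto; apply closed_compl_open; auto).
  assert (HDf : compact Y (card_preimage fi D)).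
  { apply (card_preimage_compact _ _ _ _ _ _ (homeo_pair_sym _ _ _ _ Hom)); auto.
    intros t [_ Wt] ->; auto. }
  destruct (Hp (fun y => ~ card_preimage fi D y) (compact_closed _ _ HY HDf)) as [V [HV [Vp [VD HPV]]]].
  { intros [H _]; auto. }
  exists V; split; [exact HV | split; [exact Vp|]].
  intros y H Vy. apply WU.
  apply (punctured_V_into_W Y Z p z f fi HYc HZ Hom W K V HW HK WK HV VD two); auto.
Qed.

Theorem reconstructible_criterion (Y : TopSpace) (two : bool) (p : Y) :
  compact Y (fun _ => True) -> hausdorff Y -> three_points Y ->
  small_pieces_at Y two p -> split_nbhds Y two -> reconstructible Y.
Proof.
  intros HYc HY T Hp Hloc Z [D1 D2].
  assert (HZ : hausdorff Z) by (apply (reconstruction_hausdorff Z Y); auto).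
  destruct (D2 p) as [z [f [fi Hom]]].
  destruct (avoid_two_points Z Y D1 T z z) as [w [Hwz _]].
  destruct (D1 w) as [x [h [hi Homh]]].
  apply (extend_card_homeo Y Z p z f fi); auto.
  apply (germ_control_of_split Y Z two p z f fi); auto.
  apply (reconstruction_split_nbhds Y Z two w z x h hi); auto.
Qed.

(** * The real line and the unit interval *)

(* Heine–Borel for a closed interval, by the supremum of the covered part. *)
Lemma interval_compact a b : a <= b -> compact R_top (fun x => a <= x <= b).
Proof.
  intros Hab F HF Hcov.
  set (E := fun t => a <= t <= b /\ exists l, (forall U, In U l -> F U) /\
              forall x, a <= x <= t -> exists U, In U l /\ U x).
  assert (Ea : E a).
  { split; [lra|]. destruct (Hcov a) as [U [FU Ua]]; [lra|]. exists (U :: nil); split.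
    - intros U' [<-|[]]; auto.
    - intros x Hx; exists U; split; [left; auto| replace x with a by lra; auto]. }
  destruct (completeness E) as [m [Hub Hlub]].
  { exists b; intros t [Ht _]; lra. }
  { exists a; auto. }
  assert (am : a <= m) by (apply Hub; auto).
  assert (mb : m <= b) by (apply Hlub; intros t [Ht _]; lra).
  destruct (Hcov m) as [U [FU Um]]; [lra|].
  destruct (HF U FU m Um) as [eps [Heps HU]].
  assert (Ht : exists t, E t /\ m - eps < t).
  { apply NNPP; intro Hn. assert (m <= m - eps); [|lra]. apply Hlub. intros t Et.
    apply Rnot_lt_le. intro; apply Hn; eauto. }
  destruct Ht as [t [Et Hmt]].
  assert (tm : t <= m) by (apply Hub; auto).
  destruct Et as [Ht [l [Hl Hlc]]].
  set (s := Rmin b (m + eps/2)).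
  assert (sb : s <= b) by apply Rmin_l.
  assert (sm : s <= m + eps/2) by apply Rmin_r.
  assert (Es : E s).
  { split; [split; [unfold s; apply Rmin_glb; lra | auto]|]. exists (U :: l); split.
    - intros U' [<-|?]; auto.
    - intros x Hx. destruct (Rle_dec x t).
      + destruct (Hlc x) as [U' [? ?]]; [lra|]. exists U'; split; [right|]; auto.
      + exists U; split; [left; auto|]. apply HU. split_Rabs; lra. }
  assert (s <= m) by (apply Hub; auto).
  assert (Hsb : s = b) by (unfold s, Rmin in *; destruct (Rle_dec b (m + eps/2)); lra).
  rewrite Hsb in Es. destruct Es as [_ [l' [? ?]]]. exists l'; split; auto.
Qed.

(* An interval [[a, b]] inside [S] cannot be split by open sets with [a ∈ A],
   [b ∈ B]: consider the supremum of the initial segment lying in [A]. *)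
Lemma interval_no_separation (S A B : R -> Prop) a b : a < b ->
  (forall t, a <= t <= b -> S t) ->
  is_open R_top A -> is_open R_top B ->
  (forall x, S x -> A x \/ B x) -> (forall x, S x -> A x -> B x -> False) ->
  A a -> B b -> False.
Proof.
  intros Hab HS HA HB Hc Hd Aa Bb.
  set (E := fun t => a <= t <= b /\ forall s, a <= s <= t -> A s).
  assert (Ea : E a) by (split; [lra|]; intros s Hs; replace s with a by lra; auto).
  destruct (completeness E) as [m [Hub Hlub]].
  { exists b; intros t [Ht _]; lra. }
  { exists a; auto. }
  assert (am : a <= m) by (apply Hub; auto).
  assert (mb : m <= b) by (apply Hlub; intros t [Ht _]; lra).
  assert (Approx : forall s, s < m -> exists t, E t /\ s < t).
  { intros s Hs. apply NNPP; intro Hn. assert (m <= s); [|lra]. apply Hlub. intros t Et.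
    apply Rnot_lt_le. intro; apply Hn; eauto. }
  assert (Below : forall s, a <= s < m -> A s).
  { intros s Hs. destruct (Approx s) as [t [[_ Ht] st]]; [lra|]. apply Ht; lra. }
  destruct (Hc m (HS m (conj am mb))) as [Am|Bm].
  - destruct (HA m Am) as [eps [Heps HU]].
    destruct (Req_dec m b) as [->|Hmb]; [apply (Hd b); auto|].
    set (s := Rmin b (m + eps/2)).
    assert (sb : s <= b) by apply Rmin_l.
    assert (sm : s <= m + eps/2) by apply Rmin_r.
    assert (ms : m < s) by (unfold s; apply Rmin_glb_lt; lra).
    assert (Es : E s).
    { split; [lra|]. intros x Hx. destruct (Rlt_le_dec x m).
      - apply Below; lra.
      - apply HU. split_Rabs; lra. }
    assert (s <= m) by (apply Hub; auto). lra.
  - destruct (HB m Bm) as [eps [Heps HU]].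
    destruct (Req_dec m a) as [->|Hma]; [apply (Hd a); auto|].
    destruct (Approx (m - eps)) as [t [[Ht HAt] mt]]; [lra|].
    assert (t <= m) by (apply Hub; split; auto).
    apply (Hd t); [apply HS; lra | apply HAt; lra | apply HU; split_Rabs; lra].
Qed.

Lemma convex_connected (S : R -> Prop) :
  (forall x y t, S x -> S y -> x <= t <= y -> S t) -> connected R_top S.
Proof.
  intros Hconv A B HA HB Hc Hd.
  destruct (classic (forall x, S x -> A x)) as [H|H]; [left; auto|].
  destruct (classic (forall x, S x -> B x)) as [H'|H']; [right; auto|].
  exfalso.
  apply not_all_ex_not in H as [b0 H]. apply imply_to_and in H as [Sb0 Ab0].
  apply not_all_ex_not in H' as [a0 H']. apply imply_to_and in H' as [Sa0 Ba0].
  assert (A a0) by (destruct (Hc a0 Sa0); tauto).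
  assert (B b0) by (destruct (Hc b0 Sb0); tauto).
  destruct (Rtotal_order a0 b0) as [Hlt|[Heq|Hgt]].
  - apply (interval_no_separation S A B a0 b0); auto.
    intros t Ht; apply (Hconv a0 b0); auto.
  - subst; tauto.
  - apply (interval_no_separation S B A b0 a0); auto.
    + intros t Ht; apply (Hconv b0 a0); auto.
    + intros x Sx; destruct (Hc x Sx); auto.
    + intros x Sx Bx Ax; eapply Hd; eauto.
Qed.

Lemma ball_open_R c r : is_open R_top (fun u => Rabs (u - c) < r).
Proof. intros u Hu. exists (r - Rabs (u - c)); split; [lra|]. intros y Hy. split_Rabs; lra. Qed.

Lemma ball_compl_open_R c r : is_open R_top (fun u => r < Rabs (u - c)).
Proof. intros u Hu. exists (Rabs (u - c) - r); split; [lra|]. intros y Hy. split_Rabs; lra. Qed.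

Lemma hausdorff_R : hausdorff R_top.
Proof.
  intros x y Hxy. set (d := Rabs (x - y)).
  assert (Hd : 0 < d) by (unfold d; split_Rabs; lra).
  exists (fun u => Rabs (u - x) < d/2), (fun u => Rabs (u - y) < d/2).
  split; [apply ball_open_R|split; [apply ball_open_R|]].
  split; [split_Rabs; lra|split; [split_Rabs; lra|]].
  intros t H1 H2. unfold d in *. split_Rabs; lra.
Qed.

Definition iv (y : unit_interval) : R := proj1_sig y.

Lemma I_trace (U : R -> Prop) : is_open R_top U -> is_open unit_interval (fun y => U (iv y)).
Proof. intros H. exists U; split; auto; tauto. Qed.

Lemma I_compact : compact unit_interval (fun _ => True).
Proof.
  apply compact_amb_sub. eapply compact_ext; [apply (interval_compact 0 1); lra|].
  intro x; split; [intros H; exists H; auto|intros [H _]; auto].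
Qed.

Lemma I_hausdorff : hausdorff unit_interval.
Proof. apply hausdorff_sub, hausdorff_R. Qed.

Lemma I_eq (u v : unit_interval) : iv u = iv v -> u = v.
Proof. apply (sub_eq R_top). Qed.

Lemma I_three_points : three_points unit_interval.
Proof.
  assert (H0 : 0 <= 0 <= 1) by lra. assert (H1 : 0 <= 1/2 <= 1) by lra.
  assert (H2 : 0 <= 1 <= 1) by lra.
  exists (exist _ 0 H0), (exist _ (1/2) H1), (exist _ 1 H2).
  repeat split; intro E; apply (f_equal iv) in E; unfold iv in E; simpl in E; lra.
Qed.

Definition I0 : unit_interval :=
  exist (fun x : R_top => 0 <= x <= 1) 0 (conj (Rle_refl 0) Rle_0_1).

Lemma I_small_pieces : small_pieces_at unit_interval false I0.
Proof.
  intros V0 [U0 [HU0 EU0]] V0p.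
  destruct (HU0 0 (proj1 (EU0 I0) V0p)) as [r [Hr Hball]].
  exists (fun y => Rabs (iv y - 0) < r).
  split; [apply (I_trace (fun u => Rabs (u - 0) < r)), ball_open_R|].
  split; [unfold iv, I0; simpl; split_Rabs; lra|]. split.
  - intros y Hy. apply EU0, Hball. unfold iv in Hy. split_Rabs; lra.
  - simpl. apply connected_amb_sub.
    apply connected_ext with (fun x => 0 < x <= 1 /\ Rabs (x - 0) < r).
    + apply convex_connected. intros x y t Hx Hy Ht. split; [lra|]. split_Rabs; lra.
    + intro x; split.
      * intros [Hx Hr']. exists (conj (Rlt_le _ _ (proj1 Hx)) (proj2 Hx)). split; [exact Hr'|].
        intro E. apply (f_equal iv) in E. unfold iv, I0 in E; simpl in E; lra.
      * intros [Hx [Hr' Hne]]. split; auto. destruct (Req_dec x 0) as [->|]; [|lra].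
        exfalso; apply Hne; apply I_eq; reflexivity.
Qed.

Lemma I_clusters (c : unit_interval) del :
  0 < del -> clusters_at unit_interval (fun y => Rabs (iv y - iv c) < del) c.
Proof.
  intros Hdel O [O0 [HO0 EO0]] Oc.
  destruct (HO0 _ (proj1 (EO0 c) Oc)) as [s [Hs Hballs]].
  set (tau := Rmin (Rmin del s) (1/2) / 2).
  assert (Htau : 0 < tau)
    by (unfold tau; generalize (Rmin_glb_lt (Rmin del s) (1/2) 0 (Rmin_glb_lt _ _ _ Hdel Hs)); lra).
  assert (Htd : tau < del /\ tau < s /\ tau <= 1/4).
  { unfold tau. generalize (Rmin_l (Rmin del s) (1/2)) (Rmin_r (Rmin del s) (1/2))
      (Rmin_l del s) (Rmin_r del s). lra. }
  destruct c as [cv Hc]. unfold iv in *; simpl in *.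
  assert (Hy : 0 <= (if Rle_dec cv (1/2) then cv + tau else cv - tau) <= 1)
    by (destruct (Rle_dec cv (1/2)); lra).
  exists (exist (fun x : R_top => 0 <= x <= 1) _ Hy). simpl. split; [|split].
  - intro E; apply (f_equal iv) in E; unfold iv in E; simpl in E.
    destruct (Rle_dec cv (1/2)); lra.
  - destruct (Rle_dec cv (1/2)); split_Rabs; lra.
  - apply EO0; simpl. apply Hballs. destruct (Rle_dec cv (1/2)); split_Rabs; lra.
Qed.

(* Closed balls give the required compact sets around small open balls. *)
Lemma I_split_nbhds : split_nbhds unit_interval false.
Proof.
  intros c x Hcx U [U0 [HU0 EU0]] Uc.
  destruct (HU0 _ (proj1 (EU0 c) Uc)) as [r [Hr Hball]].
  set (d := Rabs (iv c - iv x)).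
  assert (Hd : 0 < d).
  { unfold d. destruct (Req_dec (iv c) (iv x)) as [E|E]; [exfalso; apply Hcx, I_eq, E|].
    split_Rabs; lra. }
  set (del := Rmin r d / 2).
  assert (Hdel : 0 < del) by (unfold del; generalize (Rmin_glb_lt r d 0 Hr Hd); lra).
  assert (Hdr : del < r) by (unfold del; generalize (Rmin_l r d); lra).
  assert (Hdd : del < d) by (unfold del; generalize (Rmin_r r d); lra).
  exists (fun y => Rabs (iv y - iv c) < del), (fun y => Rabs (iv y - iv c) <= del).
  split; [apply (I_trace (fun u => Rabs (u - iv c) < del)), ball_open_R|].
  split; [split_Rabs; lra|].
  split; [intros y Hy; apply EU0, Hball; unfold iv in *; split_Rabs; lra|].
  split.
  { eapply compact_ext; [apply (compact_inter_closed _ _ (fun y => Rabs (iv y - iv c) <= del) I_compact)|].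
    - unfold closed. eapply open_ext;
        [apply (I_trace (fun u => del < Rabs (u - iv c))), (ball_compl_open_R (iv c) del)|].
      intro y; lra.
    - intro y; tauto. }
  split; [intros y Hy; lra|].
  split; [intros y Hy ->; unfold d in Hdd; split_Rabs; lra|].
  split; [apply I_clusters; auto | exact I].
Qed.

Theorem unit_interval_reconstructible : reconstructible unit_interval.
Proof.
  exact (reconstructible_criterion unit_interval false I0 I_compact I_hausdorff
           I_three_points I_small_pieces I_split_nbhds).
Qed.

(** * Spheres: inner products *)

Definition dot (n : nat) (x y : nat -> R) : R := sum_f_R0 (fun k => x k * y k) n.

Definition pt {n : nat} (y : sphere n) : nat -> R := proj1_sig (proj1_sig y).

Definition zv (n : nat) (v : nat -> R) : Prop := forall k, (S n <= k)%nat -> v k = 0.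

Lemma sum_prefix_le (f : nat -> R) m n :
  (forall j, 0 <= f j) -> (m <= n)%nat -> sum_f_R0 f m <= sum_f_R0 f n.
Proof.
  intros Hf Hmn. induction Hmn as [|n Hmn IH]; [lra|].
  rewrite tech5. generalize (Hf (S n)); lra.
Qed.

Lemma sum_term_le (f : nat -> R) n k :
  (forall j, 0 <= f j) -> (k <= n)%nat -> f k <= sum_f_R0 f n.
Proof.
  intros Hf Hk. destruct k as [|k].
  - apply (sum_prefix_le f 0 n Hf Hk).
  - generalize (sum_prefix_le f (S k) n Hf Hk) (cond_pos_sum f k Hf). rewrite tech5. lra.
Qed.

Lemma sum_zero_each (f : nat -> R) n k :
  (forall j, 0 <= f j) -> sum_f_R0 f n = 0 -> (k <= n)%nat -> f k = 0.
Proof. intros Hf Hs Hk. generalize (sum_term_le f n k Hf Hk) (Hf k); lra. Qed.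

Lemma dot_sym n x y : dot n x y = dot n y x.
Proof. unfold dot; apply sum_eq; intros; ring. Qed.

Lemma dot_lin n a b x y z : dot n z (fun k => a * x k + b * y k) = a * dot n z x + b * dot n z y.
Proof.
  unfold dot. rewrite <- (sum_eq (fun k => a * (z k * x k) + b * (z k * y k))) by (intros; ring).
  rewrite sum_plus, !scal_sum. f_equal; apply sum_eq; intros; ring.
Qed.

Lemma dot_linl n a b x y z : dot n (fun k => a * x k + b * y k) z = a * dot n x z + b * dot n y z.
Proof. rewrite dot_sym, dot_lin, (dot_sym n z x), (dot_sym n z y); auto. Qed.

Lemma dot_lin3 n a b d x y w z :
  dot n z (fun k => a * x k + b * y k + d * w k) = a * dot n z x + b * dot n z y + d * dot n z w.
Proof.
  replace (fun k => a * x k + b * y k + d * w k) with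
    (fun k => 1 * (fun k => a * x k + b * y k) k + d * w k)
    by (apply functional_extensionality; intros; ring).
  rewrite dot_lin, dot_lin. ring.
Qed.

Lemma dot_scal n a x z : dot n z (fun k => a * x k) = a * dot n z x.
Proof. unfold dot. rewrite scal_sum. apply sum_eq; intros; ring. Qed.

Lemma dot_nonneg n x : 0 <= dot n x x.
Proof. apply cond_pos_sum. intros k. apply Rle_0_sqr. Qed.

Lemma dot_pos_of n c v : dot n c v <> 0 -> 0 < dot n v v.
Proof.
  intros H. destruct (dot_nonneg n v) as [H'|H']; auto. exfalso. apply H.
  assert (Hv : forall k, (k <= n)%nat -> v k = 0).
  { intros k Hk. generalize (sum_zero_each (fun k => v k * v k) n k (fun j => Rle_0_sqr (v j))
      (eq_sym H') Hk). intros; nra. }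
  unfold dot. rewrite (sum_eq _ (fun _ => 0)) by (intros k Hk; rewrite Hv; auto; ring).
  rewrite sum_cte. ring.
Qed.

Lemma dot_sub_sq n x y :
  sum_f_R0 (fun k => (x k - y k) ^ 2) n = dot n x x + dot n y y - 2 * dot n x y.
Proof.
  unfold dot.
  rewrite <- (sum_eq (fun k => (x k * x k + y k * y k) - 2 * (x k * y k))) by (intros; ring).
  rewrite minus_sum, sum_plus.
  rewrite (sum_eq (fun k => 2 * (x k * y k)) (fun k => (x k * y k) * 2)) by (intros; ring).
  rewrite <- scal_sum. ring.
Qed.

Lemma zv_lin n a b x y : zv n x -> zv n y -> zv n (fun k => a * x k + b * y k).
Proof. intros Hx Hy k Hk. rewrite Hx, Hy; auto; ring. Qed.

Lemma pt_unit n (y : sphere n) : dot n (pt y) (pt y) = 1.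
Proof.
  destruct y as [[v Hv] Hs]. unfold pt, dot; simpl. simpl in Hs. rewrite <- Hs.
  apply sum_eq; intros; ring.
Qed.

Lemma pt_zv n (y : sphere n) : zv n (pt y).
Proof. destruct y as [[v Hv] Hs]; exact Hv. Qed.

Lemma sphere_ext n (a b : sphere n) : (forall k, pt a k = pt b k) -> a = b.
Proof.
  destruct a as [[va Ha] Sa], b as [[vb Hb] Sb]; unfold pt; simpl. intros E.
  assert (va = vb) by (apply functional_extensionality; auto). subst vb.
  assert (Ha = Hb) by apply proof_irrelevance. subst Hb.
  f_equal; apply proof_irrelevance.
Qed.

Lemma sphere_dist_sq n (a b : sphere n) :
  sum_f_R0 (fun k => (pt a k - pt b k) ^ 2) n = 2 - 2 * dot n (pt a) (pt b).
Proof. rewrite dot_sub_sq, !pt_unit; ring. Qed.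

Lemma dot_le1 n (a b : sphere n) : dot n (pt a) (pt b) <= 1.
Proof.
  assert (0 <= sum_f_R0 (fun k => (pt a k - pt b k) ^ 2) n)
    by (apply cond_pos_sum; intros j; apply pow2_ge_0).
  rewrite sphere_dist_sq in H; lra.
Qed.

Lemma sphere_eq_dot n (a b : sphere n) : dot n (pt a) (pt b) = 1 -> a = b.
Proof.
  intros H. apply sphere_ext. intros k. destruct (Nat.le_gt_cases k n) as [Hk|Hk].
  - assert (E : sum_f_R0 (fun k => (pt a k - pt b k) ^ 2) n = 0) by (rewrite sphere_dist_sq; lra).
    generalize (sum_zero_each (fun k => (pt a k - pt b k) ^ 2) n k
      (fun j => pow2_ge_0 _) E Hk). intros; nra.
  - rewrite !(pt_zv n); auto.
Qed.

Lemma dot_lt1 n (a b : sphere n) : a <> b -> dot n (pt a) (pt b) < 1.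
Proof. intros H. destruct (dot_le1 n a b); auto. exfalso; apply H, sphere_eq_dot; auto. Qed.

Definition mk_sph (n : nat) (v : nat -> R) (Hz : zv n v) (Hu : dot n v v = 1) : sphere n.
Proof.
  refine (exist _ (exist _ v Hz) _). simpl. transitivity (dot n v v); [|exact Hu].
  unfold dot. apply sum_eq; intros; simpl; ring.
Defined.

Lemma mk_sph_pt n v Hz Hu : pt (mk_sph n v Hz Hu) = v.
Proof. reflexivity. Qed.

Lemma sphere_antipode n (e : sphere n) :
  exists e' : sphere n, forall v, dot n (pt e') v = - dot n (pt e) v.
Proof.
  assert (Hz : zv n (fun k => -1 * pt e k + 0 * pt e k)) by (apply zv_lin; apply pt_zv).
  assert (Hu : dot n (fun k => -1 * pt e k + 0 * pt e k) (fun k => -1 * pt e k + 0 * pt e k) = 1).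
  { rewrite dot_lin, !dot_linl, pt_unit. ring. }
  exists (mk_sph n _ Hz Hu). intros v. rewrite mk_sph_pt, dot_linl. ring.
Qed.

Definition nrm (n : nat) (v : nat -> R) : nat -> R := fun k => v k / sqrt (dot n v v).

Lemma nrm_unit n v : 0 < dot n v v -> dot n (nrm n v) (nrm n v) = 1.
Proof.
  intros H. set (s := sqrt (dot n v v)).
  assert (Hs : s * s = dot n v v) by (apply sqrt_sqrt; lra).
  assert (Hs0 : 0 < s) by (apply sqrt_lt_R0; auto).
  change (dot n (nrm n v) (nrm n v)) with (sum_f_R0 (fun k => (v k / s) * (v k / s)) n).
  rewrite (sum_eq _ (fun k => (v k * v k) * / (s * s))) by (intros; cbv beta; field; lra).
  rewrite <- scal_sum. fold (dot n v v). rewrite <- Hs. field. lra.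
Qed.

Lemma nrm_zv n v : zv n v -> zv n (nrm n v).
Proof. intros H k Hk. unfold nrm. rewrite H; auto. unfold Rdiv; ring. Qed.

Definition nrm_sph n v (Hz : zv n v) (Hp : 0 < dot n v v) : sphere n :=
  mk_sph n (nrm n v) (nrm_zv n v Hz) (nrm_unit n v Hp).

Lemma dot_nrm_sph n c v Hz Hp : dot n c (pt (nrm_sph n v Hz Hp)) = dot n c v / sqrt (dot n v v).
Proof.
  unfold nrm_sph, nrm. rewrite mk_sph_pt.
  assert (0 < sqrt (dot n v v)) by (apply sqrt_lt_R0; auto).
  replace (fun k => v k / sqrt (dot n v v)) with (fun k => / sqrt (dot n v v) * v k)
    by (apply functional_extensionality; intros; field; lra).
  rewrite dot_scal. field. lra.
Qed.

Lemma coord_le_dist n (x y : nat -> R) k : (k <= n)%nat ->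
  Rabs (x k - y k) <= sqrt (sum_f_R0 (fun j => (x j - y j) ^ 2) n).
Proof.
  intros Hk. rewrite <- (sqrt_pow2 (Rabs (x k - y k))) by apply Rabs_pos. apply sqrt_le_1_alt.
  replace (Rabs (x k - y k) ^ 2) with ((x k - y k) ^ 2) by (rewrite <- !Rsqr_pow2, <- Rsqr_abs; auto).
  apply (sum_term_le (fun j => (x j - y j) ^ 2)); auto. intros j; apply pow2_ge_0.
Qed.

Lemma dot_lipschitz n (c x y : nat -> R) :
  Rabs (dot n c x - dot n c y) <=
    sum_f_R0 (fun k => Rabs (c k)) n * sqrt (sum_f_R0 (fun j => (x j - y j) ^ 2) n).
Proof.
  unfold dot. rewrite <- minus_sum.
  eapply Rle_trans; [apply sum_f_R0_triangle|]. rewrite Rmult_comm, scal_sum.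
  apply sum_Rle. intros k Hk.
  replace (c k * x k - c k * y k) with (c k * (x k - y k)) by ring. rewrite Rabs_mult.
  apply Rmult_le_compat_l; [apply Rabs_pos|]. apply coord_le_dist; auto.
Qed.

Lemma dot_open_gt n (c : nat -> R) (al : R) : is_open (sphere n) (fun y => al < dot n c (pt y)).
Proof.
  exists (fun x : euclid (S n) => al < dot n c (proj1_sig x)). split; [|intros; unfold pt; tauto].
  intros x Hx. set (M := sum_f_R0 (fun k => Rabs (c k)) n + 1).
  assert (HM : 0 < M)
    by (unfold M; generalize (cond_pos_sum (fun k => Rabs (c k)) n (fun k => Rabs_pos _)); lra).
  exists ((dot n c (proj1_sig x) - al) / M). split; [apply Rdiv_lt_0_compat; lra|].
  intros y Hy. unfold euclid_dist in Hy. simpl in Hy.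
  generalize (dot_lipschitz n c (proj1_sig x) (proj1_sig y)). intros Hl.
  set (d := sqrt (sum_f_R0 (fun j => (proj1_sig x j - proj1_sig y j) ^ 2) n)) in *.
  assert (Hd : 0 <= d) by (apply sqrt_positivity, cond_pos_sum; intros j; apply pow2_ge_0).
  assert (M * d < dot n c (proj1_sig x) - al).
  { apply (Rmult_lt_compat_l M) in Hy; auto.
    replace (M * ((dot n c (proj1_sig x) - al) / M)) with (dot n c (proj1_sig x) - al) in Hy
      by (field; lra). exact Hy. }
  assert (sum_f_R0 (fun k => Rabs (c k)) n * d <= M * d) by (apply Rmult_le_compat_r; unfold M; lra).
  split_Rabs; lra.
Qed.

Lemma dot_open_lt n (c : nat -> R) (al : R) : is_open (sphere n) (fun y => dot n c (pt y) < al).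
Proof.
  eapply open_ext; [apply (dot_open_gt n (fun k => -1 * c k + 0 * c k) (- al))|].
  intro y; cbv beta; rewrite dot_linl; lra.
Qed.

Lemma sphere_cap_nbhd n (O : sphere n -> Prop) (c : sphere n) :
  is_open (sphere n) O -> O c ->
  exists eta, 0 < eta /\ forall y, 1 - eta < dot n (pt c) (pt y) -> O y.
Proof.
  intros [U0 [HU0 EU0]] Oc. apply EU0 in Oc. destruct (HU0 _ Oc) as [r [Hr Hb]].
  exists (r * r / 2). split; [nra|]. intros y Hy. apply EU0, Hb.
  change (sqrt (sum_f_R0 (fun k => (pt c k - pt y k) ^ 2) n) < r). rewrite sphere_dist_sq.
  generalize (dot_le1 n c y); intros.
  rewrite <- (sqrt_square r) by lra. apply sqrt_lt_1_alt. lra.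
Qed.

Lemma sphere_hausdorff n : hausdorff (sphere n).
Proof.
  intros a b Hab. generalize (dot_lt1 n a b Hab) (pt_unit n a); intros H1 H2.
  set (m := (1 + dot n (pt a) (pt b)) / 2).
  exists (fun y => m < dot n (pt a) (pt y)), (fun y => dot n (pt a) (pt y) < m).
  split; [apply dot_open_gt|split; [apply dot_open_lt|]].
  unfold m; split; [lra|split; [lra|]]. intros t; lra.
Qed.

Definition bv (k : nat) : nat -> R := fun j => if Nat.eqb j k then 1 else 0.

Lemma sum_single (f : nat -> R) n k : (k <= n)%nat ->
  (forall j, (j <= n)%nat -> j <> k -> f j = 0) -> sum_f_R0 f n = f k.
Proof.
  induction n as [|n IH]; intros Hk H.
  - replace k with 0%nat by lia. reflexivity.
  - rewrite tech5. destruct (Nat.eq_dec k (S n)) as [->|Hne].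
    + rewrite (sum_eq _ (fun _ => 0)) by (intros; apply H; lia).
      rewrite sum_cte. ring.
    + rewrite IH, (H (S n)); [ring|lia|lia|lia|]. intros j Hj Hjk; apply H; lia.
Qed.

Lemma dot_bv n x k : (k <= n)%nat -> dot n x (bv k) = x k.
Proof.
  intros Hk. unfold dot. rewrite (sum_single _ n k Hk).
  - unfold bv. rewrite Nat.eqb_refl. ring.
  - intros j Hj Hjk. unfold bv. destruct (Nat.eqb j k) eqn:E; [apply Nat.eqb_eq in E; lia|ring].
Qed.

Lemma zv_bv n k : (k <= n)%nat -> zv n (bv k).
Proof. intros Hk j Hj. unfold bv. destruct (Nat.eqb j k) eqn:E; auto. apply Nat.eqb_eq in E; lia. Qed.

(* On [S^n] with [n >= 1], every point has an orthogonal point (Gram–Schmidt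
   applied to a basis vector on which [c] has a small coordinate). *)
Lemma sphere_perp1 n (c : sphere n) : (1 <= n)%nat -> exists e : sphere n, dot n (pt c) (pt e) = 0.
Proof.
  intros Hn.
  assert (Hk : exists k, (k <= n)%nat /\ pt c k * pt c k < 1).
  { generalize (sum_prefix_le (fun k => pt c k * pt c k) 1 n (fun j => Rle_0_sqr _) Hn).
    fold (dot n (pt c) (pt c)). rewrite pt_unit. simpl. intros H.
    destruct (Rlt_dec (pt c 0%nat * pt c 0%nat) 1); [exists 0%nat; split; [lia|auto]|].
    exists 1%nat; split; [lia|]. generalize (Rle_0_sqr (pt c 0%nat)); unfold Rsqr; lra. }
  destruct Hk as [k [Hk Hck]].
  set (r := fun j => 1 * bv k j + (- pt c k) * pt c j).
  assert (Hz : zv n r) by (apply zv_lin; [apply zv_bv; auto | apply pt_zv]).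
  assert (Hcr : dot n (pt c) r = 0) by (unfold r; rewrite dot_lin, dot_bv, pt_unit by auto; ring).
  assert (Hrr : dot n r r = 1 - pt c k * pt c k).
  { assert (Hrc : dot n r (pt c) = 0) by (rewrite dot_sym; auto).
    unfold r at 2. rewrite dot_lin, dot_bv, Hrc by auto. unfold r, bv. rewrite Nat.eqb_refl. ring. }
  assert (Hp : 0 < dot n r r) by lra.
  exists (nrm_sph n r Hz Hp). rewrite dot_nrm_sph, Hcr. unfold Rdiv; ring.
Qed.

Lemma sphere_perp2 n (c e : sphere n) : (2 <= n)%nat -> dot n (pt c) (pt e) = 0 ->
  exists e3 : sphere n, dot n (pt c) (pt e3) = 0 /\ dot n (pt e) (pt e3) = 0.
Proof.
  intros Hn Hce.
  assert (Hk : exists k, (k <= n)%nat /\ pt c k * pt c k + pt e k * pt e k < 1).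
  { generalize (sum_prefix_le (fun k => pt c k * pt c k) 2 n (fun j => Rle_0_sqr _) Hn)
      (sum_prefix_le (fun k => pt e k * pt e k) 2 n (fun j => Rle_0_sqr _) Hn).
    fold (dot n (pt c) (pt c)). fold (dot n (pt e) (pt e)). rewrite !pt_unit. simpl. intros H1 H2.
    destruct (Rlt_dec (pt c 0%nat * pt c 0%nat + pt e 0%nat * pt e 0%nat) 1);
      [exists 0%nat; split; [lia|auto]|].
    destruct (Rlt_dec (pt c 1%nat * pt c 1%nat + pt e 1%nat * pt e 1%nat) 1);
      [exists 1%nat; split; [lia|auto]|].
    exists 2%nat; split; [lia|]. lra. }
  destruct Hk as [k [Hk Hck]].
  set (r := fun j => 1 * bv k j + (- pt c k) * pt c j + (- pt e k) * pt e j).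
  assert (Hz : zv n r).
  { intros j Hj. unfold r. rewrite (zv_bv n k Hk j Hj), (pt_zv n c j Hj), (pt_zv n e j Hj). ring. }
  assert (Hec : dot n (pt e) (pt c) = 0) by (rewrite dot_sym; auto).
  assert (Hcr : dot n (pt c) r = 0) by (unfold r; rewrite dot_lin3, dot_bv, pt_unit, Hce by auto; ring).
  assert (Her : dot n (pt e) r = 0) by (unfold r; rewrite dot_lin3, dot_bv, pt_unit, Hec by auto; ring).
  assert (Hrr : dot n r r = 1 - pt c k * pt c k - pt e k * pt e k).
  { assert (Hrc : dot n r (pt c) = 0) by (rewrite dot_sym; auto).
    assert (Hre : dot n r (pt e) = 0) by (rewrite dot_sym; auto).
    unfold r at 2. rewrite dot_lin3, dot_bv, Hrc, Hre by auto. unfold r, bv. rewrite Nat.eqb_refl. ring. }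
  assert (Hp : 0 < dot n r r) by lra.
  exists (nrm_sph n r Hz Hp). rewrite !dot_nrm_sph, Hcr, Her. unfold Rdiv; split; ring.
Qed.

Lemma sphere_tangent n (p y : sphere n) : y <> p -> 0 < dot n (pt p) (pt y) ->
  exists e : sphere n, dot n (pt p) (pt e) = 0 /\ 0 < dot n (pt e) (pt y).
Proof.
  intros Hyp Hd. assert (Hd1 : dot n (pt p) (pt y) < 1) by (apply dot_lt1; auto).
  set (d := dot n (pt p) (pt y)) in *.
  set (v := fun k => 1 * pt y k + (- d) * pt p k).
  assert (Hz : zv n v) by (apply zv_lin; apply pt_zv).
  assert (Hyp' : dot n (pt y) (pt p) = d) by (unfold d; apply dot_sym).
  assert (Hpv : dot n (pt p) v = 0) by (unfold v; rewrite dot_lin, pt_unit; fold d; ring).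
  assert (Hyv : dot n (pt y) v = 1 - d * d) by (unfold v; rewrite dot_lin, pt_unit, Hyp'; ring).
  assert (Hvv : dot n v v = 1 - d * d).
  { unfold v at 2. rewrite dot_lin, (dot_sym n v (pt y)), (dot_sym n v (pt p)), Hyv, Hpv. ring. }
  assert (Hp : 0 < dot n v v) by (rewrite Hvv; nra).
  exists (nrm_sph n v Hz Hp). split.
  - rewrite dot_nrm_sph, Hpv. unfold Rdiv; ring.
  - rewrite dot_sym, dot_nrm_sph, Hyv. apply Rdiv_lt_0_compat; [nra|apply sqrt_lt_R0; auto].
Qed.

Lemma inv_sqrt_ge y : 0 <= y -> 1 - y <= / sqrt (1 + y).
Proof.
  intros Hy. assert (H1 : sqrt (1 + y) <= 1 + y).
  { rewrite <- (sqrt_square (1 + y)) at 2 by lra. apply sqrt_le_1_alt. nra. }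
  assert (H0 : 0 < sqrt (1 + y)) by (apply sqrt_lt_R0; lra).
  apply Rle_trans with (/ (1 + y)).
  - apply (Rmult_le_reg_r (1 + y)); [lra|]. rewrite Rinv_l by lra. nra.
  - apply Rinv_le_contravar; lra.
Qed.

Lemma sphere_nudge n (a : sphere n) (u : nat -> R) : zv n u -> dot n (pt a) u = 0 ->
  forall eps, 0 < eps -> exists t, 0 < t /\ exists w : sphere n,
    (forall c, dot n c (pt w) = (dot n c (pt a) + t * dot n c u) / sqrt (1 + t * t * dot n u u)) /\
    1 - eps < dot n (pt a) (pt w).
Proof.
  intros Hz Hau eps Heps.
  set (q := dot n u u). assert (Hq : 0 <= q) by apply dot_nonneg.
  set (t := Rmin 1 (eps / (q + 1))).
  assert (Ht0 : 0 < t) by (unfold t; apply Rmin_glb_lt; [lra|apply Rdiv_lt_0_compat; lra]).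
  assert (Ht1 : t <= 1) by apply Rmin_l.
  assert (Htq : t * t * q < eps).
  { assert (t * (q + 1) <= eps).
    { generalize (Rmin_r 1 (eps / (q + 1))); fold t; intros Ht2.
      apply (Rmult_le_compat_r (q + 1)) in Ht2; [|lra]. unfold Rdiv in Ht2.
      rewrite Rmult_assoc, Rinv_l, Rmult_1_r in Ht2 by lra. exact Ht2. }
    nra. }
  exists t; split; auto.
  set (v := fun k => 1 * pt a k + t * u k).
  assert (Hvz : zv n v) by (apply zv_lin; [apply pt_zv|auto]).
  assert (Hvv : dot n v v = 1 + t * t * q).
  { unfold v. rewrite dot_lin, !dot_linl, pt_unit, Hau, (dot_sym n u (pt a)), Hau. fold q. ring. }
  assert (Hp : 0 < dot n v v) by (rewrite Hvv; nra).
  exists (nrm_sph n v Hvz Hp). split.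
  - intros c. rewrite dot_nrm_sph, Hvv. unfold v. rewrite dot_lin. f_equal; ring.
  - rewrite dot_nrm_sph, Hvv. unfold v. rewrite dot_lin, pt_unit, Hau.
    replace ((1 * 1 + t * 0) / sqrt (1 + t * t * q)) with (/ sqrt (1 + t * t * q))
      by (field; apply Rgt_not_eq, sqrt_lt_R0; nra).
    generalize (inv_sqrt_ge (t * t * q) ltac:(nra)). lra.
Qed.

Lemma sphere_three_points n : (1 <= n)%nat -> three_points (sphere n).
Proof.
  intros Hn.
  assert (Z0 : zv n (bv 0)) by (apply zv_bv; lia).
  assert (Z1 : zv n (bv 1)) by (apply zv_bv; lia).
  assert (U0 : dot n (bv 0) (bv 0) = 1) by (rewrite dot_bv by lia; reflexivity).
  assert (U1 : dot n (bv 1) (bv 1) = 1) by (rewrite dot_bv by lia; reflexivity).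
  destruct (sphere_antipode n (mk_sph n _ Z0 U0)) as [e' He'].
  exists (mk_sph n _ Z0 U0), e', (mk_sph n _ Z1 U1).
  assert (E0 : dot n (pt e') (bv 0) = -1) by (rewrite He', mk_sph_pt, U0; ring).
  rewrite dot_bv in E0 by lia.
  repeat split; intro E; apply (f_equal (fun y => pt y 0%nat)) in E; rewrite ?mk_sph_pt in E;
    unfold bv in *; simpl in *; lra.
Qed.

Lemma continuity_pt_eps (f : R -> R) x : continuity_pt f x ->
  forall eps, 0 < eps -> exists del, 0 < del /\ forall y, Rabs (y - x) < del -> Rabs (f y - f x) < eps.
Proof.
  intros H eps Heps. destruct (H eps Heps) as [del [Hdel Hd]].
  exists del; split; auto. intros y Hy. destruct (Req_dec y x) as [->|Hne].
  - rewrite Rminus_diag, Rabs_R0; auto.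
  - apply (Hd y). split; [split; [exact I|auto]|]. exact Hy.
Qed.

Lemma sphere_path_continuous n (g : R -> sphere n) :
  (forall (c : nat -> R) s, continuity_pt (fun s' => dot n c (pt (g s'))) s) ->
  @continuous R_top (sphere n) g.
Proof.
  intros Hg O HO s Os.
  destruct (sphere_cap_nbhd n O (g s) HO Os) as [eta [Heta HO']].
  destruct (continuity_pt_eps _ s (Hg (pt (g s)) s) eta Heta) as [del [Hdel Hd]].
  exists del; split; auto. intros s' Hs'. apply HO'.
  specialize (Hd s' ltac:(split_Rabs; lra)). rewrite pt_unit in Hd. split_Rabs; lra.
Qed.

(* The clamp of [s] to [[0, 1]], so that paths can be parametrized by the line. *)
Definition clamp01 (s : R) : R := Rmax 0 (Rmin 1 s).

Lemma clamp01_cases s :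
  (s <= 0 /\ clamp01 s = 0) \/ (0 <= s <= 1 /\ clamp01 s = s) \/ (1 <= s /\ clamp01 s = 1).
Proof.
  unfold clamp01. destruct (Rle_dec 1 s) as [h|h].
  - rewrite Rmin_left by lra. rewrite Rmax_right by lra. right; right; split; lra.
  - rewrite Rmin_right by lra. destruct (Rle_dec 0 s) as [h2|h2].
    + rewrite Rmax_right by lra. right; left; split; lra.
    + rewrite Rmax_left by lra. left; split; lra.
Qed.

Lemma clamp01_range s : 0 <= clamp01 s <= 1.
Proof. destruct (clamp01_cases s) as [[? ->]|[[? ->]|[? ->]]]; lra. Qed.

Lemma clamp01_id s : 0 <= s <= 1 -> clamp01 s = s.
Proof. intros H. destruct (clamp01_cases s) as [[? ->]|[[? ->]|[? ->]]]; lra. Qed.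

Lemma clamp01_continuous x : continuity_pt clamp01 x.
Proof.
  intros eps Heps. exists eps; split; auto. intros y [_ Hy]. simpl in *. unfold Rdist in *.
  destruct (clamp01_cases x) as [[? ->]|[[? ->]|[? ->]]];
  destruct (clamp01_cases y) as [[? ->]|[[? ->]|[? ->]]]; split_Rabs; lra.
Qed.

Lemma segment_functional_continuous (A B P0 P1 P2 : R) x :
  (forall s, 0 < P0 + P1 * clamp01 s + P2 * (clamp01 s * clamp01 s)) ->
  continuity_pt (fun s => ((1 - clamp01 s) * A + clamp01 s * B) /
                          sqrt (P0 + P1 * clamp01 s + P2 * (clamp01 s * clamp01 s))) x.
Proof.
  intros HP. assert (Hc := clamp01_continuous x).
  assert (Hk : forall c, continuity_pt (fun _ => c) x) by (intros; apply continuity_pt_const; intros ? ?; auto).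
  apply continuity_pt_div.
  - apply continuity_pt_plus; apply continuity_pt_mult; auto.
    apply continuity_pt_minus; auto.
  - apply (continuity_pt_comp (fun s => P0 + P1 * clamp01 s + P2 * (clamp01 s * clamp01 s)) sqrt).
    + repeat apply continuity_pt_plus; repeat apply continuity_pt_mult; auto.
    + apply continuity_pt_sqrt. generalize (HP x); lra.
  - apply Rgt_not_eq, sqrt_lt_R0; auto.
Qed.

Lemma sphere_segment n (e x y : sphere n) :
  0 < dot n (pt e) (pt x) -> 0 < dot n (pt e) (pt y) ->
  exists g : R -> sphere n, @continuous R_top (sphere n) g /\ g 0 = x /\ g 1 = y /\
    forall s, 0 <= s <= 1 -> exists q, 0 < q <= 1 /\ forall c,
      dot n c (pt (g s)) = ((1 - s) * dot n c (pt x) + s * dot n c (pt y)) / q.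
Proof.
  intros Hx Hy. set (D := dot n (pt x) (pt y)).
  set (v := fun s k => (1 - s) * pt x k + s * pt y k).
  assert (Hvv : forall s, dot n (v s) (v s) = 1 + (2 * D - 2) * s + (2 - 2 * D) * (s * s)).
  { intros s. unfold v. rewrite dot_lin, !dot_linl, !pt_unit, (dot_sym n (pt y) (pt x)). fold D. ring. }
  assert (Hcv : forall c s, dot n c (v s) = (1 - s) * dot n c (pt x) + s * dot n c (pt y))
    by (intros; unfold v; rewrite dot_lin; ring).
  assert (Hz : forall s, zv n (v (clamp01 s))) by (intros; apply zv_lin; apply pt_zv).
  assert (Hp : forall s, 0 < dot n (v (clamp01 s)) (v (clamp01 s))).
  { intros s. apply (dot_pos_of n (pt e)). rewrite Hcv. generalize (clamp01_range s). nra. }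
  set (g := fun s => nrm_sph n (v (clamp01 s)) (Hz s) (Hp s)).
  assert (Hg : forall c s, dot n c (pt (g s)) =
            ((1 - clamp01 s) * dot n c (pt x) + clamp01 s * dot n c (pt y)) /
            sqrt (1 + (2 * D - 2) * clamp01 s + (2 - 2 * D) * (clamp01 s * clamp01 s)))
    by (intros; unfold g; rewrite dot_nrm_sph, Hcv, Hvv; reflexivity).
  assert (HD : D <= 1) by apply dot_le1.
  assert (Hends : forall s w, (s = 0 /\ w = x) \/ (s = 1 /\ w = y) -> g s = w).
  { intros s w Hs. apply sphere_ext. intros k. unfold g, nrm_sph. rewrite mk_sph_pt. unfold nrm.
    rewrite Hvv, clamp01_id by lra. unfold v.
    destruct Hs as [[-> ->]|[-> ->]];
      (replace (1 + (2 * D - 2) * _ + (2 - 2 * D) * (_ * _)) with 1 by ring);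
      rewrite sqrt_1; field. }
  exists g. split; [|split; [apply Hends; auto | split; [apply Hends; auto|]]].
  - apply sphere_path_continuous. intros c s.
    eapply (continuity_pt_locally_ext _ _ 1 s); [lra | intros; symmetry; apply Hg|].
    apply segment_functional_continuous. intros s'. rewrite <- Hvv. apply Hp.
  - intros s Hs. set (q := sqrt (1 + (2 * D - 2) * s + (2 - 2 * D) * (s * s))).
    exists q. split; [split|].
    + apply sqrt_lt_R0. rewrite <- (clamp01_id s Hs), <- Hvv. apply Hp.
    + assert (0 <= (1 - D) * (s * (1 - s))) by (apply Rmult_le_pos; [lra | apply Rmult_le_pos; lra]).
      apply Rle_trans with (sqrt 1); [apply sqrt_le_1_alt; lra | rewrite sqrt_1; lra].
    + intros c. rewrite Hg, clamp01_id; auto.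
Qed.

Definition half_cap n (a e : sphere n) (eta : R) : sphere n -> Prop :=
  fun y => 1 - eta < dot n (pt a) (pt y) /\ 0 < dot n (pt e) (pt y).

Lemma half_cap_open n (a e : sphere n) eta : is_open (sphere n) (half_cap n a e eta).
Proof. apply open_inter; apply dot_open_gt. Qed.

(* Half-caps are connected: normalized segments stay inside them, since the
   normalizing factor is at most [1]. *)
Lemma half_cap_connected n (a e : sphere n) eta :
  eta <= 1 -> connected (sphere n) (half_cap n a e eta).
Proof.
  intros Heta. apply connected_chain. intros x y [Hax Hex] [Hay Hey].
  destruct (sphere_segment n e x y Hex Hey) as [g [Hg [G0 [G1 Hgs]]]].
  exists (fun w => exists s, (0 <= s <= 1) /\ g s = w). split; [|split; [|split]].
  - apply (connected_image R_top (sphere n) g (fun s => 0 <= s <= 1) Hg).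
    apply convex_connected. intros; simpl in *; lra.
  - intros w Hw. destruct Hw as [s [Hs Hw]]. subst w.
    destruct (Hgs s Hs) as [q [Hq Hc]]. split; rewrite Hc.
    + assert (Hlin : 1 - eta < (1 - s) * dot n (pt a) (pt x) + s * dot n (pt a) (pt y)).
      { assert (0 <= s * (dot n (pt a) (pt y) - (1 - eta))) by (apply Rmult_le_pos; lra).
        assert (0 <= (1 - s) * (dot n (pt a) (pt x) - (1 - eta))) by (apply Rmult_le_pos; lra).
        destruct (Rle_dec s (1/2)); nra. }
      apply Rlt_le_trans with ((1 - s) * dot n (pt a) (pt x) + s * dot n (pt a) (pt y)); auto.
      apply (Rmult_le_reg_r q); [lra|]. unfold Rdiv. rewrite Rmult_assoc, Rinv_l by lra. nra.
    + apply Rdiv_lt_0_compat; [nra | lra].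
  - exists 0; split; [lra | exact G0].
  - exists 1; split; [lra | exact G1].
Qed.

Lemma half_cap_punctured n (p e : sphere n) eta y : dot n (pt p) (pt e) = 0 ->
  half_cap n p e eta y -> 1 - eta < dot n (pt p) (pt y) /\ y <> p.
Proof. intros He [H1 H2]. split; auto. intros ->. rewrite dot_sym, He in H2. lra. Qed.

Lemma half_caps_overlap n (p e e' : sphere n) eta : 0 < eta ->
  dot n (pt p) (pt e) = 0 -> dot n (pt p) (pt e') = 0 -> -1 < dot n (pt e) (pt e') ->
  exists w, half_cap n p e eta w /\ half_cap n p e' eta w.
Proof.
  intros Heta H1 H2 H3.
  set (u := fun k => 1 * pt e k + 1 * pt e' k).
  assert (Hz : zv n u) by (apply zv_lin; apply pt_zv).
  assert (Hpu : dot n (pt p) u = 0) by (unfold u; rewrite dot_lin, H1, H2; ring).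
  destruct (sphere_nudge n p u Hz Hpu eta Heta) as [t [Ht [w [Hw Hpw]]]].
  assert (Hs : 0 < sqrt (1 + t * t * dot n u u))
    by (apply sqrt_lt_R0; generalize (dot_nonneg n u); nra).
  exists w. unfold half_cap. split; split; auto; rewrite Hw; apply Rdiv_lt_0_compat; auto.
  - rewrite (dot_sym n (pt e) (pt p)), H1. unfold u. rewrite dot_lin, pt_unit. nra.
  - rewrite (dot_sym n (pt e') (pt p)), H2. unfold u.
    rewrite dot_lin, pt_unit, (dot_sym n (pt e') (pt e)). nra.
Qed.

Lemma half_cap_clusters n (c e : sphere n) eta : dot n (pt c) (pt e) = 0 -> 0 < eta ->
  clusters_at (sphere n) (half_cap n c e eta) c.
Proof.
  intros Hce Heta O HO Oc. destruct (sphere_cap_nbhd n O c HO Oc) as [eta' [Heta' HO']].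
  destruct (sphere_nudge n c (pt e) (pt_zv n e) Hce (Rmin eta eta') (Rmin_glb_lt _ _ _ Heta Heta'))
    as [t [Ht [w [Hw Hcw]]]].
  assert (Hs : 0 < sqrt (1 + t * t * dot n (pt e) (pt e))) by (apply sqrt_lt_R0; rewrite pt_unit; nra).
  assert (Hew : 0 < dot n (pt e) (pt w)).
  { rewrite Hw, (dot_sym n (pt e) (pt c)), Hce.
    apply Rdiv_lt_0_compat; [rewrite pt_unit; lra | exact Hs]. }
  exists w. split; [|split; [split|]]; auto.
  - intros ->. rewrite dot_sym, Hce in Hew. lra.
  - generalize (Rmin_l eta eta'); lra.
  - apply HO'. generalize (Rmin_r eta eta'); lra.
Qed.

Definition finite_subcover {T : Type} (F : (T -> Prop) -> Prop) (K : T -> Prop) : Prop :=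
  exists l, (forall U, In U l -> F U) /\ forall x, K x -> exists U, In U l /\ U x.

Definition box (m : nat) (y x : nat -> R) (d : R) : Prop :=
  forall k, (k < m)%nat -> Rabs (y k - x k) < d.

Definition box_open (m : nat) (A : (nat -> R) -> Prop) : Prop :=
  forall x, A x -> exists d, 0 < d /\ forall y, box m y x d -> A y.

Definition cube (m : nat) (x : nat -> R) : Prop := forall k, (k < m)%nat -> Rabs (x k) <= 1.

Definition cube_compact (m : nat) : Prop :=
  forall F, (forall U, F U -> box_open m U) -> (forall x, cube m x -> exists U, F U /\ U x) ->
    finite_subcover F (cube m).

Lemma finite_subcover_union {T : Type} (F : (T -> Prop) -> Prop) (l : list (T -> Prop)) :
  (forall A, In A l -> finite_subcover F A) -> finite_subcover F (fun y => exists A, In A l /\ A y).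
Proof.
  induction l as [|A l IH]; intros Hl.
  - exists nil; split; [intros ? []|]. intros y [A [[] _]].
  - destruct (Hl A (or_introl eq_refl)) as [lU [HlU HlUc]].
    destruct IH as [lU' [HlU' HlUc']]; [intros; apply Hl; right; auto|].
    exists (lU ++ lU'). split.
    + intros U HU. apply in_app_or in HU as [?|?]; auto.
    + intros y [A0 [[<-|HA0] A0y]].
      * destruct (HlUc y A0y) as [U [? ?]]. exists U; split; auto. apply in_or_app; left; auto.
      * destruct (HlUc' y) as [U [? ?]]; eauto. exists U; split; auto. apply in_or_app; right; auto.
Qed.

Lemma list_min_pos {A : Type} (l : list A) (P : A -> R -> Prop) :
  (forall a, In a l -> exists d, 0 < d /\ forall d', 0 < d' <= d -> P a d') ->
  exists d, 0 < d /\ forall a, In a l -> forall d', 0 < d' <= d -> P a d'.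
Proof.
  induction l as [|a l IH]; intros Hl.
  - exists 1; split; [lra | intros ? []].
  - destruct (Hl a (or_introl eq_refl)) as [d [Hd Ha]].
    destruct IH as [d' [Hd' Hl']]; [intros; apply Hl; right; auto|].
    exists (Rmin d d'). split; [apply Rmin_glb_lt; auto|].
    generalize (Rmin_l d d') (Rmin_r d d'). intros H1 H2 b [<-|Hb] e He.
    + apply Ha; lra.
    + apply Hl'; auto; lra.
Qed.

Definition upd (m : nat) (x : nat -> R) (t : R) : nat -> R :=
  fun k => if Nat.eqb k m then t else x k.

(* The auxiliary
   sets [O U d] are the box-neighbourhoods (in the first [m] coordinates) of
   points whose [2d]-box around level [t] lies in [U]. *)
Lemma cube_tube m : cube_compact m ->
  forall F, (forall U, F U -> box_open (S m) U) -> (forall x, cube (S m) x -> exists U, F U /\ U x) ->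
  forall t, Rabs t <= 1 ->
    exists d, 0 < d /\ finite_subcover F (fun y => cube (S m) y /\ Rabs (y m - t) < d).
Proof.
  intros IH F HF Hcov t Ht.
  set (O := fun (U : (nat -> R) -> Prop) (d : R) (x : nat -> R) => exists x0 eta, 0 < eta /\
              (forall k, (k < m)%nat -> Rabs (x k - x0 k) + eta < d) /\
              forall y, (forall k, (k < m)%nat -> Rabs (y k - x0 k) < 2 * d) ->
                Rabs (y m - t) < 2 * d -> U y).
  destruct (IH (fun V => exists U d, F U /\ 0 < d /\ V = O U d)) as [l [Hl Hlc]].
  - intros V [U [d [FU [Hd ->]]]] x [x0 [eta [Heta [Hb HU]]]].
    exists (eta / 2). split; [lra|]. intros y Hy. exists x0, (eta / 2).
    split; [lra|split; auto]. intros k Hk. specialize (Hb k Hk); specialize (Hy k Hk). split_Rabs; lra.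
  - intros x Hx.
    assert (Cx' : cube (S m) (upd m x t)).
    { intros k Hk; unfold upd; destruct (Nat.eqb k m) eqn:E; auto.
      apply Hx; apply Nat.eqb_neq in E; lia. }
    destruct (Hcov _ Cx') as [U [FU Ux']]. destruct (HF U FU _ Ux') as [d0 [Hd0 Hb]].
    exists (O U (d0 / 2)). split; [exists U, (d0 / 2); repeat split; auto; lra|].
    exists (upd m x t), (d0 / 4). split; [lra|split].
    + intros k Hk. unfold upd. destruct (Nat.eqb k m) eqn:E; [apply Nat.eqb_eq in E; lia|].
      rewrite Rminus_diag, Rabs_R0; lra.
    + intros y Hy Hym. apply Hb. intros k Hk. destruct (Nat.eq_dec k m) as [->|Hne].
      * unfold upd. rewrite Nat.eqb_refl. lra.
      * specialize (Hy k ltac:(lia)). lra.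
  - destruct (list_min_pos l (fun V d => exists U, F U /\ forall y, V y -> Rabs (y m - t) < d -> U y))
      as [d [Hd Hld]].
    + intros V HV. destruct (Hl V HV) as [U [d [FU [Hd ->]]]].
      exists d. split; auto. intros d' Hd'. exists U. split; auto.
      intros y [x0 [eta [Heta [Hb HU]]]] Hym. apply HU; [|lra].
      intros k Hk. specialize (Hb k Hk). split_Rabs; lra.
    + destruct (list_pick (fun V U => F U /\ forall y, V y -> Rabs (y m - t) < d -> U y) l)
        as [lU [H1 H2]].
      * intros V HV. apply (Hld V HV d). lra.
      * exists d. split; auto. exists lU. split.
        -- intros U HU. destruct (H1 U HU) as [V [_ [? _]]]; auto.
        -- intros y [Hy Hym]. destruct (Hlc y) as [V [HV Vy]]; [intros k Hk; apply Hy; lia|].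
           destruct (H2 V HV) as [U [? [_ HU]]]. eauto.
Qed.

(* Tychonoff for cubes: [[-1,1]^m] is compact, by induction on [m] using the
   tube lemma and the compactness of [[-1, 1]]. *)
Lemma cube_compact_all m : cube_compact m.
Proof.
  induction m as [|m IH]; intros F HF Hcov.
  - destruct (Hcov (fun _ => 0)) as [U [FU Ux]]; [intros k Hk; lia|].
    destruct (HF U FU _ Ux) as [d [Hd HU]].
    exists (U :: nil); split; [intros U' [<-|[]]; auto|].
    intros x _; exists U; split; [left; auto|]. apply HU. intros k Hk; lia.
  - set (slab := fun (A : R -> Prop) y => cube (S m) y /\ A (y m)).
    destruct (interval_compact (-1) 1 ltac:(lra)
                (fun A => is_open R_top A /\ finite_subcover F (slab A))) as [lA [HlA HlAc]].
    + intros A [HA _]; exact HA.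
    + intros s Hs. destruct (cube_tube m IH F HF Hcov s) as [d [Hd Hsub]]; [split_Rabs; lra|].
      exists (fun s' => Rabs (s' - s) < d). split; [split; [apply ball_open_R | exact Hsub]|].
      rewrite Rminus_diag, Rabs_R0; auto.
    + destruct (finite_subcover_union F (map slab lA)) as [lU [HlU HlUc]].
      * intros B HB. apply in_map_iff in HB as [A [<- HA]]. apply (HlA A HA).
      * exists lU. split; auto. intros y Hy. apply HlUc.
        destruct (HlAc (y m)) as [A [HA Ay]]; [specialize (Hy m ltac:(lia)); split_Rabs; lra|].
        exists (slab A). split; [apply in_map; auto | split; auto].
Qed.

Definition trunc (n : nat) (x : nat -> R) : nat -> R := fun k => if Nat.leb k n then x k else 0.

Lemma trunc_zv n x : zv n (trunc n x).
Proof. intros k Hk. unfold trunc. destruct (Nat.leb k n) eqn:E; auto. apply Nat.leb_le in E; lia. Qed.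

Lemma trunc_le n x k : (k <= n)%nat -> trunc n x k = x k.
Proof. intros Hk. unfold trunc. destruct (Nat.leb k n) eqn:E; auto. apply Nat.leb_gt in E; lia. Qed.

Definition etr (n : nat) (x : nat -> R) : euclid (S n) := exist _ (trunc n x) (trunc_zv n x).

Lemma etr_pt n (y : sphere n) : etr n (pt y) = proj1_sig y.
Proof.
  assert (E : trunc n (pt y) = pt y).
  { apply functional_extensionality. intros k.
    destruct (Nat.le_gt_cases k n) as [Hk|Hk].
    - rewrite trunc_le; auto.
    - rewrite (trunc_zv n _ k), (pt_zv n y k) by lia. reflexivity. }
  unfold etr. generalize (trunc_zv n (pt y)). rewrite E. intros H.
  destruct y as [[v Hv] Hs]. unfold pt; simpl. f_equal. apply proof_irrelevance.
Qed.

Lemma sum_lt (f g : nat -> R) n :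
  (forall k, (k <= n)%nat -> f k < g k) -> sum_f_R0 f n < sum_f_R0 g n.
Proof.
  induction n as [|n IH]; intros H; simpl.
  - apply H; lia.
  - generalize (IH (fun k Hk => H k ltac:(lia))) (H (S n) ltac:(lia)); lra.
Qed.

Lemma euclid_open_box_open n (U0 : euclid (S n) -> Prop) :
  is_open (euclid (S n)) U0 -> box_open (S n) (fun x => U0 (etr n x)).
Proof.
  intros HU0 x Ux. destruct (HU0 _ Ux) as [eps [Heps Hb]].
  assert (HS : 1 <= INR (S n)) by (rewrite S_INR; generalize (pos_INR n); lra).
  set (b := eps / INR (S n)).
  assert (Hb0 : 0 < b) by (apply Rdiv_lt_0_compat; lra).
  exists b. split; auto. intros y Hy. apply Hb.
  unfold euclid_dist. simpl.
  rewrite (sum_eq _ (fun k => (x k - y k) ^ 2)) by (intros; rewrite !trunc_le; auto).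
  rewrite <- (sqrt_square eps) by lra. apply sqrt_lt_1_alt.
  split; [apply cond_pos_sum; intros; apply pow2_ge_0|].
  apply Rlt_le_trans with (sum_f_R0 (fun _ => b ^ 2) n).
  - apply sum_lt. intros k Hk. specialize (Hy k ltac:(lia)).
    rewrite <- (Rsqr_pow2 (x k - y k)), Rsqr_abs, Rsqr_pow2.
    generalize (Rabs_pos (x k - y k)). replace (Rabs (x k - y k)) with (Rabs (y k - x k))
      by (split_Rabs; lra). intros; nra.
  - rewrite sum_cte. unfold b, Rdiv.
    replace ((eps * / INR (S n)) ^ 2 * INR (S n)) with (eps * eps * / INR (S n)) by (field; lra).
    assert (/ INR (S n) <= 1) by (rewrite <- Rinv_1; apply Rinv_le_contravar; lra).
    assert (0 < / INR (S n)) by (apply Rinv_0_lt_compat; lra). nra.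
Qed.

Lemma dot_sq_box_continuous n x eps : 0 < eps -> exists d, 0 < d /\
  forall y, box (S n) y x d -> Rabs (dot n y y - dot n x x) < eps.
Proof.
  intros Heps. set (M := sum_f_R0 (fun k => 2 * Rabs (x k) + 1) n + 1).
  assert (HM0 : 0 <= sum_f_R0 (fun k => 2 * Rabs (x k) + 1) n)
    by (apply cond_pos_sum; intros; generalize (Rabs_pos (x n0)); lra).
  assert (HM : 0 < M) by (unfold M; lra).
  set (d := Rmin 1 (eps / M)).
  assert (Hd0 : 0 < d) by (unfold d; apply Rmin_glb_lt; [lra|apply Rdiv_lt_0_compat; lra]).
  assert (Hd1 : d <= 1) by apply Rmin_l.
  assert (HdM : d * M <= eps).
  { generalize (Rmin_r 1 (eps / M)); fold d; intros H.
    apply (Rmult_le_compat_r M) in H; [|lra]. unfold Rdiv in H.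
    rewrite Rmult_assoc, Rinv_l, Rmult_1_r in H by lra. exact H. }
  exists d; split; auto. intros y Hy.
  unfold dot. rewrite <- minus_sum.
  eapply Rle_lt_trans; [apply sum_f_R0_triangle|].
  apply Rle_lt_trans with (sum_f_R0 (fun k => d * (2 * Rabs (x k) + 1)) n).
  - apply sum_Rle. intros k Hk. specialize (Hy k ltac:(lia)).
    replace (y k * y k - x k * x k) with ((y k - x k) * (y k + x k)) by ring. rewrite Rabs_mult.
    apply Rmult_le_compat; try apply Rabs_pos; [lra|]. split_Rabs; lra.
  - rewrite (sum_eq _ (fun k => (2 * Rabs (x k) + 1) * d)) by (intros; ring). rewrite <- scal_sum.
    assert (d * sum_f_R0 (fun k => 2 * Rabs (x k) + 1) n < d * M)
      by (apply Rmult_lt_compat_l; unfold M; lra).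
    lra.
Qed.

(* [S^n] is compact: an open cover of [S^n], together with the two open sets
   [|x| < 1] and [|x| > 1], covers the cube [[-1,1]^(n+1)]. *)
Lemma sphere_compact n : compact (sphere n) (fun _ => True).
Proof.
  intros F HF Hcov.
  set (AV := fun (V : sphere n -> Prop) (x : nat -> R) => exists U0, is_open (euclid (S n)) U0 /\
               (forall y : sphere n, V y <-> U0 (proj1_sig y)) /\ U0 (etr n x)).
  set (F' := fun A : (nat -> R) -> Prop => (exists V, F V /\ A = AV V) \/
               A = (fun x => dot n x x < 1) \/ A = (fun x => 1 < dot n x x)).
  destruct (cube_compact_all (S n) F') as [l [Hl Hlc]].
  - intros A [[V [FV ->]]|[->| ->]] x Ax.
    + destruct Ax as [U0 [HU0 [EV Ux]]].
      destruct (euclid_open_box_open n U0 HU0 x Ux) as [d [Hd Hb]].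
      exists d. split; auto. intros y Hy. exists U0. auto.
    + destruct (dot_sq_box_continuous n x (1 - dot n x x) ltac:(lra)) as [d [Hd Hb]].
      exists d; split; auto. intros y Hy. specialize (Hb y Hy). split_Rabs; lra.
    + destruct (dot_sq_box_continuous n x (dot n x x - 1) ltac:(lra)) as [d [Hd Hb]].
      exists d; split; auto. intros y Hy. specialize (Hb y Hy). split_Rabs; lra.
  - intros x Hx. destruct (Rtotal_order (dot n x x) 1) as [Hlt|[Heq|Hgt]].
    + exists (fun x => dot n x x < 1). split; auto. right; left; auto.
    + assert (Hs : sum_f_R0 (fun k => proj1_sig (etr n x) k ^ 2) n = 1).
      { rewrite <- Heq. unfold dot. apply sum_eq. intros k Hk. simpl. rewrite trunc_le; auto; ring. }
      destruct (Hcov (exist _ (etr n x) Hs) I) as [V [FV Vy]]. destruct (HF V FV) as [U0 [HU0 EV]].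
      exists (AV V). split; [left; exists V; auto|]. exists U0. split; auto. split; auto.
      apply EV in Vy. exact Vy.
    + exists (fun x => 1 < dot n x x). split; auto. right; right; auto.
  - assert (Z0 : zv n (bv 0)) by (apply zv_bv; lia).
    assert (U0 : dot n (bv 0) (bv 0) = 1) by (rewrite dot_bv by lia; reflexivity).
    destruct (Hcov (mk_sph n _ Z0 U0) I) as [V0 [FV0 _]].
    destruct (list_pick (fun A V => F V /\ forall y : sphere n, A (pt y) -> V y) l) as [l' [H1 H2]].
    + intros A HA. destruct (Hl A HA) as [[V [FV ->]]|[->| ->]].
      * exists V. split; auto. intros y [U0' [_ [EV Uy]]]. apply EV. rewrite <- etr_pt. exact Uy.
      * exists V0. split; auto. intros y Ay. rewrite pt_unit in Ay. lra.
      * exists V0. split; auto. intros y Ay. rewrite pt_unit in Ay. lra.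
    + exists l'. split.
      * intros V HV. destruct (H1 V HV) as [A [_ [? _]]]; auto.
      * intros y _. destruct (Hlc (pt y)) as [A [HA Ay]].
        { intros k Hk. generalize (sum_term_le (fun k => pt y k * pt y k) n k
            (fun j => Rle_0_sqr _) ltac:(lia)).
          fold (dot n (pt y) (pt y)). rewrite pt_unit. intros. split_Rabs; nra. }
        destruct (H2 A HA) as [V [HV [_ HAV]]]. exists V; split; auto.
Qed.

Lemma plane_perp (e0 e1 v0 v1 : R) : e0 * e0 + e1 * e1 = 1 -> e0 * v0 + e1 * v1 = 0 ->
  v0 = - e1 * (v1 * e0 - v0 * e1) /\ v1 = e0 * (v1 * e0 - v0 * e1).
Proof.
  intros He Hv.
  assert (A0 : v0 * (e0 * e0 + e1 * e1) = v0) by (rewrite He; ring).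
  assert (A1 : v1 * (e0 * e0 + e1 * e1) = v1) by (rewrite He; ring).
  assert (B0 : e0 * (e0 * v0 + e1 * v1) = 0) by (rewrite Hv; ring).
  assert (B1 : e1 * (e0 * v0 + e1 * v1) = 0) by (rewrite Hv; ring).
  split; lra.
Qed.

Lemma dot1 (a b : nat -> R) : dot 1 a b = a 0%nat * b 0%nat + a 1%nat * b 1%nat.
Proof. reflexivity. Qed.

(* On the circle, the points orthogonal to [e] are [c] and its antipode, so a
   point orthogonal to [e] on the same side as [c] is [c]. *)
Lemma circle_perp_unique (c e y : sphere 1) : dot 1 (pt c) (pt e) = 0 -> dot 1 (pt e) (pt y) = 0 ->
  0 < dot 1 (pt c) (pt y) -> y = c.
Proof.
  intros H1 H2 H3. generalize (pt_unit 1 c) (pt_unit 1 e) (pt_unit 1 y). rewrite !dot1 in *.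
  intros Uc Ue Uy.
  destruct (plane_perp (pt e 0%nat) (pt e 1%nat) (pt c 0%nat) (pt c 1%nat)) as [Ec0 Ec1]; [lra..|].
  destruct (plane_perp (pt e 0%nat) (pt e 1%nat) (pt y 0%nat) (pt y 1%nat)) as [Ey0 Ey1]; [lra..|].
  set (k := pt c 1%nat * pt e 0%nat - pt c 0%nat * pt e 1%nat) in *.
  set (k' := pt y 1%nat * pt e 0%nat - pt y 0%nat * pt e 1%nat) in *.
  rewrite Ec0, Ec1 in Uc. rewrite Ey0, Ey1 in Uy. rewrite Ec0, Ec1, Ey0, Ey1 in H3.
  set (E2 := pt e 0%nat * pt e 0%nat + pt e 1%nat * pt e 1%nat) in Ue.
  assert (Hsq : forall a b, - pt e 1%nat * a * (- pt e 1%nat * b) + pt e 0%nat * a * (pt e 0%nat * b)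
                            = a * b * E2) by (intros; unfold E2; ring).
  rewrite Hsq, Ue in Uc, Uy, H3.
  assert (Ekk : k = k').
  { assert ((k - k') * (k - k') = 0) by nra.
    nra. }
  apply sphere_ext. intros [|[|j]].
  - rewrite Ey0, Ec0, Ekk; ring.
  - rewrite Ey1, Ec1, Ekk; ring.
  - rewrite !(pt_zv 1) by lia. reflexivity.
Qed.

Lemma circle_cap_halves (p e e' : sphere 1) eta y :
  dot 1 (pt p) (pt e) = 0 -> (forall v, dot 1 (pt e') v = - dot 1 (pt e) v) -> eta <= 1 ->
  1 - eta < dot 1 (pt p) (pt y) -> y <> p -> half_cap 1 p e eta y \/ half_cap 1 p e' eta y.
Proof.
  intros He He' Heta Hy Hyp. destruct (Rtotal_order 0 (dot 1 (pt e) (pt y))) as [Hq|[Hz|Hm]].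
  - left; split; auto.
  - exfalso. apply Hyp. apply (circle_perp_unique p e y); auto. lra.
  - right; split; auto. rewrite He'. lra.
Qed.

(* For [n >= 2], small punctured caps are connected: any two of their points
   lie in half-caps which are linked by a chain of overlapping half-caps. *)
Lemma punctured_cap_connected n (p : sphere n) eta : (2 <= n)%nat -> 0 < eta <= 1/2 ->
  connected (sphere n) (fun y => 1 - eta < dot n (pt p) (pt y) /\ y <> p).
Proof.
  intros Hn Heta. assert (Hconn := fun e => half_cap_connected n p e eta ltac:(lra)).
  apply connected_chain. intros y1 y2 [Hy1 Hy1p] [Hy2 Hy2p].
  destruct (sphere_tangent n p y1 Hy1p ltac:(lra)) as [e1 [Hpe1 He1y]].
  destruct (sphere_tangent n p y2 Hy2p ltac:(lra)) as [e2 [Hpe2 He2y]].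
  destruct (Rlt_dec (-1) (dot n (pt e1) (pt e2))) as [Hlt|Hge].
  - destruct (half_caps_overlap n p e1 e2 eta ltac:(lra) Hpe1 Hpe2 Hlt) as [w [Hw1 Hw2]].
    exists (fun y => half_cap n p e1 eta y \/ half_cap n p e2 eta y). split; [|split; [|split]].
    + apply connected_union2; eauto.
    + intros y [Hy|Hy]; [apply (half_cap_punctured n p e1) | apply (half_cap_punctured n p e2)]; auto.
    + left; split; auto.
    + right; split; auto.
  - (* [e2] is the antipode of [e1]: pass through a third orthogonal direction *)
    destruct (sphere_antipode n e1) as [e1' He1'].
    assert (Hle : dot n (pt e1') (pt e2) <= 1) by apply dot_le1.
    rewrite He1' in Hle.
    assert (E12 : e1' = e2) by (apply sphere_eq_dot; rewrite He1'; lra). subst e2.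
    destruct (sphere_perp2 n p e1 Hn Hpe1) as [e3 [Hpe3 He13]].
    assert (He31 : dot n (pt e3) (pt e1') = 0) by (rewrite dot_sym, He1'; lra).
    destruct (half_caps_overlap n p e1 e3 eta ltac:(lra) Hpe1 Hpe3 ltac:(lra)) as [w1 [Hw1 Hw3]].
    destruct (half_caps_overlap n p e3 e1' eta ltac:(lra) Hpe3 Hpe2 ltac:(lra)) as [w2 [Hw3' Hw2]].
    exists (fun y => (half_cap n p e1 eta y \/ half_cap n p e3 eta y) \/ half_cap n p e1' eta y).
    split; [|split; [|split]].
    + apply connected_union2; [apply connected_union2| |]; eauto.
    + intros y [[Hy|Hy]|Hy];
        [apply (half_cap_punctured n p e1) | apply (half_cap_punctured n p e3)
        | apply (half_cap_punctured n p e1')]; auto.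
    + left; left; split; auto.
    + right; split; auto.
Qed.

Lemma sphere_small_pieces n (p : sphere n) : (1 <= n)%nat ->
  small_pieces_at (sphere n) (Nat.eqb n 1) p.
Proof.
  intros Hn V0 HV0 V0p.
  destruct (sphere_cap_nbhd n V0 p HV0 V0p) as [eta0 [Heta0 HV]].
  set (eta := Rmin eta0 (1/2)).
  assert (He : 0 < eta <= 1/2 /\ eta <= eta0).
  { unfold eta. generalize (Rmin_l eta0 (1/2)) (Rmin_r eta0 (1/2)).
    assert (0 < Rmin eta0 (1/2)) by (apply Rmin_glb_lt; lra). lra. }
  exists (fun y => 1 - eta < dot n (pt p) (pt y)).
  split; [apply dot_open_gt|]. split; [rewrite pt_unit; lra|].
  split; [intros y Hy; apply HV; lra|].
  destruct (Nat.eqb n 1) eqn:E.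
  - apply Nat.eqb_eq in E. subst n.
    destruct (sphere_perp1 1 p Hn) as [e Hpe]. destruct (sphere_antipode 1 e) as [e' He'].
    assert (Hpe' : dot 1 (pt p) (pt e') = 0) by (rewrite dot_sym, He', dot_sym, Hpe; ring).
    exists (half_cap 1 p e eta), (half_cap 1 p e' eta).
    split; [apply half_cap_connected; lra|]. split; [apply half_cap_connected; lra|].
    split; [intros y Hy; apply (half_cap_punctured 1 p e); auto|].
    split; [intros y Hy; apply (half_cap_punctured 1 p e'); auto|].
    intros y Hy Hyp. apply (circle_cap_halves p e e' eta y); auto; lra.
  - apply punctured_cap_connected; [apply Nat.eqb_neq in E; lia | lra].
Qed.

Lemma sphere_split_nbhds n : (1 <= n)%nat -> split_nbhds (sphere n) (Nat.eqb n 1).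
Proof.
  intros Hn c x Hcx U HU Uc.
  destruct (sphere_cap_nbhd n U c HU Uc) as [eta0 [Heta0 HU0]].
  assert (Hdcx : dot n (pt c) (pt x) < 1) by (apply dot_lt1; auto).
  set (eta := Rmin (Rmin eta0 ((1 - dot n (pt c) (pt x)) / 2)) (1/2)).
  assert (He : 0 < eta /\ eta <= 1/2 /\ eta <= eta0 /\ eta <= (1 - dot n (pt c) (pt x)) / 2).
  { unfold eta. generalize (Rmin_l (Rmin eta0 ((1 - dot n (pt c) (pt x)) / 2)) (1/2))
      (Rmin_r (Rmin eta0 ((1 - dot n (pt c) (pt x)) / 2)) (1/2))
      (Rmin_l eta0 ((1 - dot n (pt c) (pt x)) / 2)) (Rmin_r eta0 ((1 - dot n (pt c) (pt x)) / 2)).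
    repeat split; try lra. repeat apply Rmin_glb_lt; lra. }
  destruct (sphere_perp1 n c Hn) as [e Hce].
  destruct (sphere_antipode n e) as [e' He'].
  assert (Hce' : dot n (pt c) (pt e') = 0) by (rewrite dot_sym, He', dot_sym, Hce; ring).
  exists (fun y => 1 - eta < dot n (pt c) (pt y)), (fun y => 1 - eta <= dot n (pt c) (pt y)).
  split; [apply dot_open_gt|]. split; [rewrite pt_unit; lra|].
  split; [intros y Hy; apply HU0; lra|].
  split.
  { eapply compact_ext; [apply (compact_inter_closed _ _ (fun y => 1 - eta <= dot n (pt c) (pt y))
                                  (sphere_compact n))|].
    - unfold closed. eapply open_ext; [apply (dot_open_lt n (pt c) (1 - eta))|]. intro y; lra.
    - intro y; tauto. }
  split; [intros y Hy; lra|]. split; [intros y Hy ->; lra|].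
  split.
  { intros O HO Oc. destruct (half_cap_clusters n c e eta Hce ltac:(lra) O HO Oc)
      as [y [? [[? ?] ?]]]. eauto. }
  destruct (Nat.eqb n 1) eqn:E; [|exact I].
  apply Nat.eqb_eq in E. subst n.
  exists (half_cap 1 c e eta), (half_cap 1 c e' eta).
  split; [apply half_cap_open|]. split; [apply half_cap_open|].
  split; [intros y [H1 _]; exact H1|]. split; [intros y [H1 _]; exact H1|].
  split; [intros y Hy Hyc; apply (circle_cap_halves c e e' eta y); auto; lra|].
  split; [intros y [_ H1] [_ H2]; rewrite He' in H2; lra|].
  split; apply half_cap_clusters; auto; lra.
Qed.

Theorem sphere_reconstructible n : (1 <= n)%nat -> reconstructible (sphere n).
Proof.
  intros Hn.
  assert (Z0 : zv n (bv 0)) by (apply zv_bv; lia).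
  assert (U0 : dot n (bv 0) (bv 0) = 1) by (rewrite dot_bv by lia; reflexivity).
  exact (reconstructible_criterion (sphere n) (Nat.eqb n 1) (mk_sph n _ Z0 U0) (sphere_compact n)
           (sphere_hausdorff n) (sphere_three_points n Hn) (sphere_small_pieces n _ Hn)
           (sphere_split_nbhds n Hn)).
Qed.

Theorem theorem2p3 :
  reconstructible unit_interval /\
  (forall n : nat, (1 <= n)%nat -> reconstructible (sphere n)).
Proof.
  split; [exact unit_interval_reconstructible | exact sphere_reconstructible].
Qed.
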